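(* Let $\mathcal C$ be the class of ultimately periodic traces or the class of ultimately constant traces. Then countable satisfiability, $\mathcal C$-restricted satisfiability and $\mathcal C$-restricted finite satisfiability of $\mathrm{LTL}(\sim)$ are logspace-reducible to $\mathbf{\Delta^2_0}$.
   Context: Let $\mathrm{AP}$ be a countably infinite set of atomic propositions. A trace is an infinite sequence $t=t(0)t(1)\cdots\in(\wp\mathrm{AP})^\omega$, and $t^i=t(i)t(i+1)\cdots$. A team is a (possibly empty) set $T$ of traces, and $T^i=\{t^i: t\in T\}$. Formulas of $\mathrm{LTL}(\sim)$ are given by $\varphi::=p\mid\neg\varphi\mid\varphi\wedge\varphi\mid\varphi\vee\varphi\mid\mathsf X\varphi\mid\mathsf F\varphi\mid\mathsf G\varphi\mid\varphi\,\mathsf U\,\varphi\mid\varphi\,\mathsf R\,\varphi\mid{\sim}\varphi$ with $p\in\mathrm{AP}$. Synchronous team semantics: $T\models p$ iff $p\in t(0)$ for all $t\in T$; $T\models\neg\varphi$ iff $\{t\}\not\models\varphi$ for all $t\in T$; $T\models\varphi\wedge\psi$ iff $T\models\varphi$ and $T\models\psi$; $T\models\varphi\vee\psi$ iff $T=S\cup U$ for some $S,U$ with $S\models\varphi$ and $U\models\psi$; $T\models\mathsf X\varphi$ iff $T^1\models\varphi$; $T\models\mathsf F\varphi$ iff $T^k\models\varphi$ for some $k\ge0$; $T\models\mathsf G\varphi$ iff $T^k\models\varphi$ for all $k\ge0$; $T\models\varphi\,\mathsf U\,\psi$ iff there is $k\ge0$ with $T^k\models\psi$ and $T^j\models\varphi$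 for all $j<k$; $T\models\varphi\,\mathsf R\,\psi$ iff for all $k\ge0$, $T^k\models\psi$ or $T^j\models\varphi$ for some $j<k$; $T\models{\sim}\varphi$ iff $T\not\models\varphi$. A finite Kripke structure is $K=(W,R,\eta,r)$ with $W$ finite nonempty, $R\subseteq W\times W$ serial, $\eta:W\to\wp\mathrm{AP}$ with finite labels, and root $r\in W$; a path is $\pi\in W^\omega$ with $\pi(0)=r$ and $(\pi(i),\pi(i+1))\in R$; it induces the trace $(\eta(\pi(i)))_{i\ge0}$; $T(K)$ is the team of all induced traces. A trace $t$ is ultimately periodic if there are $c,d>0$ with $t(n)=t(n+d)$ for all $n\ge c$, and ultimately constant if some suffix $t^i$ is constant. Countable satisfiability: formulas satisfied by some countable team. For a class $\mathcal C$ of traces, $\mathcal C$-restricted satisfiability is the set of $\varphi$ such that $T\cap\mathcal C\models\varphi$ for some team $T$; $\mathcal C$-restricted finite satisfiability is the set of $\varphi$ such that $T(K)\cap\mathcal C\models\varphi$ for some finite Kripke structure $K$. $\mathbf{\Delta^2_0}$ denotes the set of closed formulas of second-order arithmetic (vocabulary $+,\times,0,1,=,\le$; first-order variables over $\mathbb N$, second-order variables of arity $n$ over subsets of $\mathbb N^n$) true in the standard model $\mathbb N$. *)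

From Stdlib Require Import Arith List PArith Bool.
Import ListNotations.

Definition trace := nat -> nat -> bool.   (* t i p = true  <->  p \in t(i) *)
Definition team := trace -> Prop.

Definition suffix (t : trace) (k : nat) : trace := fun n => t (k + n).
Definition team_shift (T : team) (k : nat) : team :=
  fun s => exists t, T t /\ s = suffix t k.
Definition singleton (t : trace) : team := fun s => s = t.

Inductive ltl : Type :=
| LAtom : nat -> ltl
| LNeg : ltl -> ltl
| LAnd : ltl -> ltl -> ltl
| LOr : ltl -> ltl -> ltl
| LX : ltl -> ltl
| LF : ltl -> ltl
| LG : ltl -> ltl
| LU : ltl -> ltl -> ltl
| LR : ltl -> ltl -> ltl
| LTilde : ltl -> ltl.

Fixpoint tsat (phi : ltl) (T : team) {struct phi} : Prop :=
  match phi with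
  | LAtom p => forall t, T t -> t 0 p = true
  | LNeg f => forall t, T t -> ~ tsat f (singleton t)
  | LAnd f g => tsat f T /\ tsat g T
  | LOr f g => exists S U : team, (forall t, T t <-> S t \/ U t) /\ tsat f S /\ tsat g U
  | LX f => tsat f (team_shift T 1)
  | LF f => exists k, tsat f (team_shift T k)
  | LG f => forall k, tsat f (team_shift T k)
  | LU f g => exists k, tsat g (team_shift T k) /\ forall j, j < k -> tsat f (team_shift T j)
  | LR f g => forall k, tsat g (team_shift T k) \/ exists j, j < k /\ tsat f (team_shift T j)
  | LTilde f => ~ tsat f T
  end.

Record kripke := mkKripke {
  kW : nat;
  kR : nat -> nat -> bool;
  keta : nat -> nat -> bool;     (* labelling: keta w p = true <-> p \in eta(w) *)
  kroot : nat }.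

Definition wf_kripke (K : kripke) : Prop :=
  0 < kW K /\ kroot K < kW K /\
  (forall w, w < kW K -> exists v, v < kW K /\ kR K w v = true) /\
  (exists B, forall w p, w < kW K -> keta K w p = true -> p < B).

Definition kpath (K : kripke) (pi : nat -> nat) : Prop :=
  pi 0 = kroot K /\ forall i, pi i < kW K /\ kR K (pi i) (pi (S i)) = true.

Definition teamK (K : kripke) : team :=
  fun t => exists pi, kpath K pi /\ t = (fun i => keta K (pi i)).

Definition ult_periodic (t : trace) : Prop :=
  exists c d, 0 < c /\ 0 < d /\ forall n, c <= n -> t n = t (n + d).

Definition ult_constant (t : trace) : Prop :=
  exists i, forall n, t (i + n) = t i.

Definition countable_team (T : team) : Prop :=
  exists f : nat -> trace, forall t, T t -> exists n, f n = t.

Definition CountSat (phi : ltl) : Prop :=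
  exists T, countable_team T /\ tsat phi T.

Definition CSat (C : trace -> Prop) (phi : ltl) : Prop :=
  exists T : team, tsat phi (fun t => T t /\ C t).

Definition CFinSat (C : trace -> Prop) (phi : ltl) : Prop :=
  exists K, wf_kripke K /\ tsat phi (fun t => teamK K t /\ C t).

Inductive term : Type :=
| TVar : nat -> term
| TZero : term
| TOne : term
| TAdd : term -> term -> term
| TMul : term -> term -> term.

(* second-order variable = (name j, arity n) *)
Inductive sform : Type :=
| SEq : term -> term -> sform
| SLe : term -> term -> sform
| SMem : nat -> nat -> list term -> sform
| SNeg : sform -> sform
| SAnd : sform -> sform -> sform
| SOr : sform -> sform -> sform
| SEx1 : nat -> sform -> sform
| SAll1 : nat -> sform -> sform
| SEx2 : nat -> nat -> sform -> sform
| SAll2 : nat -> nat -> sform -> sform.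

Fixpoint teval (e : nat -> nat) (t : term) : nat :=
  match t with
  | TVar i => e i
  | TZero => 0
  | TOne => 1
  | TAdd a b => teval e a + teval e b
  | TMul a b => teval e a * teval e b
  end.

Definition upd1 (e : nat -> nat) (i v : nat) : nat -> nat :=
  fun i' => if Nat.eqb i' i then v else e i'.
Definition upd2 (e : nat -> nat -> list nat -> Prop) (j n : nat) (X : list nat -> Prop)
  : nat -> nat -> list nat -> Prop :=
  fun j' n' => if Nat.eqb j' j && Nat.eqb n' n then X else e j' n'.

(* second-order variables of arity n range over all subsets of N^n, represented as
   predicates on lists (only lists of length n are ever queried in closed formulas) *)
Fixpoint sholds (e1 : nat -> nat) (e2 : nat -> nat -> list nat -> Prop) (f : sform)
  {struct f} : Prop :=
  match f with
  | SEq a b => teval e1 a = teval e1 b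
  | SLe a b => teval e1 a <= teval e1 b
  | SMem j n ts => e2 j n (map (teval e1) ts)
  | SNeg g => ~ sholds e1 e2 g
  | SAnd g h => sholds e1 e2 g /\ sholds e1 e2 h
  | SOr g h => sholds e1 e2 g \/ sholds e1 e2 h
  | SEx1 i g => exists v, sholds (upd1 e1 i v) e2 g
  | SAll1 i g => forall v, sholds (upd1 e1 i v) e2 g
  | SEx2 j n g => exists X, sholds e1 (upd2 e2 j n X) g
  | SAll2 j n g => forall X, sholds e1 (upd2 e2 j n X) g
  end.

Fixpoint term_closed (B : list nat) (t : term) : Prop :=
  match t with
  | TVar i => In i B
  | TZero | TOne => True
  | TAdd a b | TMul a b => term_closed B a /\ term_closed B b
  end.

(* syntactic closedness (plus arity well-formedness of atoms) *)
Fixpoint sclosed (B1 : list nat) (B2 : list (nat * nat)) (f : sform) : Prop :=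
  match f with
  | SEq a b | SLe a b => term_closed B1 a /\ term_closed B1 b
  | SMem j n ts => In (j, n) B2 /\ length ts = n /\ Forall (term_closed B1) ts
  | SNeg g => sclosed B1 B2 g
  | SAnd g h | SOr g h => sclosed B1 B2 g /\ sclosed B1 B2 h
  | SEx1 i g | SAll1 i g => sclosed (i :: B1) B2 g
  | SEx2 j n g | SAll2 j n g => sclosed B1 ((j, n) :: B2) g
  end.

Definition Delta20 (f : sform) : Prop :=
  sclosed [] [] f /\ sholds (fun _ => 0) (fun _ _ _ => False) f.

Fixpoint enc_pos (p : positive) : list bool :=
  match p with
  | xH => []
  | xO q => [true; false] ++ enc_pos q
  | xI q => [true; true] ++ enc_pos q
  end.

(* numbers in binary (LSB first, bits doubled), self-delimiting *)
Definition enc_nat (n : nat) : list bool :=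
  match n with
  | O => [false; true]
  | S _ => enc_pos (Pos.of_nat n) ++ [false; false]
  end.

Definition tag (k : nat) : list bool :=
  [Nat.testbit k 0; Nat.testbit k 1; Nat.testbit k 2; Nat.testbit k 3].

Fixpoint enc_ltl (f : ltl) : list bool :=
  match f with
  | LAtom p => tag 0 ++ enc_nat p
  | LNeg g => tag 1 ++ enc_ltl g
  | LAnd g h => tag 2 ++ enc_ltl g ++ enc_ltl h
  | LOr g h => tag 3 ++ enc_ltl g ++ enc_ltl h
  | LX g => tag 4 ++ enc_ltl g
  | LF g => tag 5 ++ enc_ltl g
  | LG g => tag 6 ++ enc_ltl g
  | LU g h => tag 7 ++ enc_ltl g ++ enc_ltl h
  | LR g h => tag 8 ++ enc_ltl g ++ enc_ltl h
  | LTilde g => tag 9 ++ enc_ltl g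
  end.

Fixpoint enc_term (t : term) : list bool :=
  match t with
  | TVar i => tag 0 ++ enc_nat i
  | TZero => tag 1
  | TOne => tag 2
  | TAdd a b => tag 3 ++ enc_term a ++ enc_term b
  | TMul a b => tag 4 ++ enc_term a ++ enc_term b
  end.

Fixpoint enc_sform (f : sform) : list bool :=
  match f with
  | SEq a b => tag 0 ++ enc_term a ++ enc_term b
  | SLe a b => tag 1 ++ enc_term a ++ enc_term b
  | SMem j n ts => tag 2 ++ enc_nat j ++ enc_nat n ++ enc_nat (length ts)
                     ++ flat_map enc_term ts
  | SNeg g => tag 3 ++ enc_sform g
  | SAnd g h => tag 4 ++ enc_sform g ++ enc_sform h
  | SOr g h => tag 5 ++ enc_sform g ++ enc_sform h
  | SEx1 i g => tag 6 ++ enc_nat i ++ enc_sform g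
  | SAll1 i g => tag 7 ++ enc_nat i ++ enc_sform g
  | SEx2 j n g => tag 8 ++ enc_nat j ++ enc_nat n ++ enc_sform g
  | SAll2 j n g => tag 9 ++ enc_nat j ++ enc_nat n ++ enc_sform g
  end.

Definition lang_ltl (P : ltl -> Prop) : list bool -> Prop :=
  fun w => exists f, w = enc_ltl f /\ P f.
Definition lang_sform (P : sform -> Prop) : list bool -> Prop :=
  fun w => exists f, w = enc_sform f /\ P f.

(*  read-only input tape with endmarkers (positions 0..|w|+1),         *)
(*  one read/write work tape over {0..nG-1} (blank 0),                 *)
Inductive Sym := LEnd | REnd | Bit (b : bool).
Inductive Dir := DL | DS | DR.

Record LTM := mkLTM {
  nQ : nat;
  nG : nat;
  q0 : nat;
  halting : nat -> bool;
  delta : nat -> Sym -> nat -> (nat * Dir * nat * Dir * option bool) }.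
  (* delta q a g = (q', input move, written work symbol, work move, output) *)

Definition wf_LTM (M : LTM) : Prop :=
  0 < nG M /\ q0 M < nQ M /\
  forall q s g, q < nQ M -> g < nG M ->
    match delta M q s g with (q', _, g', _, _) => q' < nQ M /\ g' < nG M end.

Record cfg := mkCfg { cq : nat; ci : nat; ctape : nat -> nat; cj : nat; cout : list bool }.

Definition read_in (w : list bool) (i : nat) : Sym :=
  match i with
  | O => LEnd
  | S i' => match nth_error w i' with Some b => Bit b | None => REnd end
  end.

Definition move_in (n i : nat) (d : Dir) : nat :=
  match d with DL => pred i | DS => i | DR => Nat.min (S i) (S n) end.

Definition move_w (j : nat) (d : Dir) : nat :=
  match d with DL => pred j | DS => j | DR => S j end.

Definition init_cfg (M : LTM) : cfg := mkCfg (q0 M) 0 (fun _ => 0) 0 [].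

Definition step (M : LTM) (w : list bool) (c : cfg) : cfg :=
  if halting M (cq c) then c else
  match delta M (cq c) (read_in w (ci c)) (ctape c (cj c)) with
  | (q', di, g, dw, o) =>
      mkCfg q' (move_in (length w) (ci c) di)
            (fun x => if Nat.eqb x (cj c) then g else ctape c x)
            (move_w (cj c) dw)
            (cout c ++ match o with Some b => [b] | None => [] end)
  end.

Definition run (M : LTM) (w : list bool) (k : nat) : cfg :=
  Nat.iter k (step M w) (init_cfg M).

Definition logspace_computable (f : list bool -> list bool) : Prop :=
  exists (M : LTM) (c : nat), wf_LTM M /\
    forall w,
      (exists k, halting M (cq (run M w k)) = true /\ cout (run M w k) = f w) /\
      (forall k, cj (run M w k) <= c * Nat.log2 (length w + 2)).

Definition logspace_reducible (A B : list bool -> Prop) : Prop :=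
  exists f, logspace_computable f /\ forall w, A w <-> B (f w).

(* Semantic half: a countable team is coded by a ternary relation R (trace i
   has proposition p at time n iff R(i,n,p)) and a unary X (the indices in the
   team).  [ltl2so] translates an LTL(~) formula into a second-order formula
   that, evaluated with R, X and a time offset, holds iff the coded team
   (shifted by the offset) satisfies the formula ([ltl2so_correct]).  Each of
   the three problems is equivalent to the existence of such a code with an
   extra, second-order definable side condition ([countsat_coded],
   [csat_coded], [cfinsat_coded]); for restricted satisfiability this uses
   that only finitely many propositions matter ([restrict_props_correct]) and
   that bounded ultimately periodic traces can be enumerated ([enum_surj]).
   Wrapping [ltl2so] in the corresponding existential prefix gives closed
   sentences [sent_count], [sent_restr], [sent_kripke].
   Syntactic half: the encoding of [ltl2so phi] is produced from the encoding
   of phi by a streaming, finite-state rewriting [stream] ([stream_enc]); it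
   outputs a non-decodable word on ill-formed inputs ([stream_inv], using the
   unique decodability of [enc_sform]).  A constant-space transducer
   implements it ([machine_correct]), which yields [reduction_generic] and
   the theorem. *)

From Stdlib Require Import Arith List PArith Bool Lia Classical ClassicalEpsilon
  FunctionalExtensionality Cantor.
Import ListNotations.

(* Teams are predicates; satisfaction only depends on their extension. *)
Definition teq (T T' : team) : Prop := forall t, T t <-> T' t.

Lemma teq_sym : forall T T', teq T T' -> teq T' T.
Proof. intros T T' H t; symmetry; apply H. Qed.

Lemma teq_shift : forall T T' k, teq T T' -> teq (team_shift T k) (team_shift T' k).
Proof.
  intros T T' k H t. unfold team_shift.
  split; intros [u [Hu ->]]; exists u; split; auto; apply H; auto.
Qed.

Lemma tsat_teq_impl : forall phi T T', teq T T' -> tsat phi T -> tsat phi T'.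
Proof.
  induction phi; intros T T' H Hs; simpl in *.
  - intros t Ht; apply Hs; apply H; auto.
  - intros t Ht; apply Hs; apply H; auto.
  - destruct Hs; split; eauto.
  - destruct Hs as [S [U [HU [H1 H2]]]]; exists S, U; split; auto.
    intros t; rewrite <- HU; symmetry; apply H.
  - eapply IHphi; [apply teq_shift, H|exact Hs].
  - destruct Hs as [k Hk]; exists k; eapply IHphi; [apply teq_shift, H|exact Hk].
  - intros k; eapply IHphi; [apply teq_shift, H|apply Hs].
  - destruct Hs as [k [Hk Hj]]; exists k; split.
    + eapply IHphi2; [apply teq_shift, H|exact Hk].
    + intros j Hjk. eapply IHphi1; [apply teq_shift, H|exact (Hj j Hjk)].
  - intros k; destruct (Hs k) as [Hg|[j [Hj Hf]]].
    + left. eapply IHphi2; [apply teq_shift, H|exact Hg].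
    + right. exists j. split; auto. eapply IHphi1; [apply teq_shift, H|exact Hf].
  - intro Hc; apply Hs. eapply IHphi; [apply teq_sym, H|exact Hc].
Qed.

Lemma tsat_teq : forall phi T T', teq T T' -> (tsat phi T <-> tsat phi T').
Proof. intros; split; apply tsat_teq_impl; auto using teq_sym. Qed.

Lemma suffix_suffix : forall t a b, suffix (suffix t a) b = suffix t (a + b).
Proof. intros. unfold suffix. extensionality n. rewrite Nat.add_assoc. reflexivity. Qed.

Definition pb (P : Prop) : bool := if excluded_middle_informative P then true else false.

Lemma pb_true : forall P, pb P = true <-> P.
Proof. intros P. unfold pb. destruct (excluded_middle_informative P); split; auto; discriminate. Qed.

Lemma pb_ext : forall P Q, (P <-> Q) -> pb P = pb Q.
Proof.
  intros P Q H. unfold pb.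
  destruct (excluded_middle_informative P), (excluded_middle_informative Q); tauto.
Qed.

Lemma pb_bool : forall b, pb (b = true) = b.
Proof.
  intros b. destruct b; [apply pb_true; auto|].
  destruct (pb (false = true)) eqn:E; auto. rewrite pb_true in E. discriminate.
Qed.

(* Trace number [i] of a ternary relation [R]: proposition [p] holds at time [n]
   iff [R [i; n; p]]; the team coded by [R] and a unary [X] consists of the
   traces whose index is in [X], all shifted by [k]. *)
Definition coded_trace (R : list nat -> Prop) (i : nat) : trace :=
  fun n p => pb (R [i; n; p]).
Definition coded_team (R X : list nat -> Prop) (k : nat) : team :=
  fun t => exists i, X [i] /\ t = suffix (coded_trace R i) k.

Lemma coded_team_shift : forall R X k j,
  teq (team_shift (coded_team R X k) j) (coded_team R X (k + j)).
Proof.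
  intros R X k j t. unfold team_shift, coded_team. split.
  - intros [u [[i [Hi ->]] ->]]. exists i. split; auto. apply suffix_suffix.
  - intros [i [Hi ->]]. exists (suffix (coded_trace R i) k).
    split; [exists i; auto|]. symmetry; apply suffix_suffix.
Qed.

Lemma tsat_coded_shift : forall phi R X k j,
  tsat phi (team_shift (coded_team R X k) j) <-> tsat phi (coded_team R X (k + j)).
Proof. intros. apply tsat_teq, coded_team_shift. Qed.

Lemma coded_team_ext : forall R X Y k, (forall v, X [v] <-> Y [v]) ->
  teq (coded_team R X k) (coded_team R Y k).
Proof.
  intros R X Y k H t. unfold coded_team.
  split; intros [i [Hi ->]]; exists i; split; auto; apply H; auto.
Qed.

Lemma coded_team_single : forall R X k v, (forall v', X [v'] <-> v' = v) ->
  teq (coded_team R X k) (singleton (suffix (coded_trace R v) k)).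
Proof.
  intros R X k v H t. unfold coded_team, singleton. split.
  - intros [i [Hi ->]]. apply H in Hi. subst. reflexivity.
  - intros ->. exists v. split; auto. apply H; reflexivity.
Qed.

(** * The translation of LTL(~) into second-order arithmetic *)

Definition two : term := TAdd TOne TOne.
Fixpoint numpos (p : positive) : term :=
  match p with
  | xH => TOne
  | xO q => TAdd TZero (TMul two (numpos q))
  | xI q => TAdd TOne (TMul two (numpos q))
  end.
Definition num (n : nat) : term :=
  match n with 0 => TZero | S _ => numpos (Pos.of_nat n) end.

Lemma teval_numpos : forall e p, teval e (numpos p) = Pos.to_nat p.
Proof.
  intros e p. induction p; simpl; rewrite ?IHp.
  - rewrite Pos2Nat.inj_xI. lia.
  - rewrite Pos2Nat.inj_xO. lia.
  - reflexivity.
Qed.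

Lemma teval_num : forall e n, teval e (num n) = n.
Proof. intros e [|n]; [reflexivity|]. unfold num. rewrite teval_numpos. apply Nat2Pos.id. lia. Qed.

(* First order: 0 is the current
   time, 1 ranges over trace indices, 2 and 4 are time offsets, 3 saves the
   time at which an offset is added, 5 is used to define a singleton.
   Second order: (0,3) is the relation R coding the traces, (0,1) is the set X
   of indices of the current team, (1,1) and (2,1) are the parts of a split. *)
Definition memX (v : nat) : sform := SMem 0 1 [TVar v].
Definition memY (v : nat) : sform := SMem 1 1 [TVar v].
Definition memZ (v : nat) : sform := SMem 2 1 [TVar v].
Definition siff (a b : sform) : sform := SAnd (SOr (SNeg a) b) (SOr (SNeg b) a).
Definition fUnion : sform := SAll1 1 (siff (memX 1) (SOr (memY 1) (memZ 1))).
Definition fEqXY : sform := SAll1 1 (siff (memX 1) (memY 1)).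
Definition fEqXZ : sform := SAll1 1 (siff (memX 1) (memZ 1)).
Definition fSingle : sform := SAll1 5 (siff (memX 5) (SEq (TVar 5) (TVar 1))).

(* [setk t f]: evaluate [f] with the current time replaced by [t], where [t]
   may refer to the current time through variable 3. *)
Definition setk (t : term) (f : sform) : sform :=
  SEx1 3 (SAnd (SEq (TVar 3) (TVar 0)) (SEx1 0 (SAnd (SEq (TVar 0) t) f))).
Definition shifted_by_2 : term := TAdd (TVar 3) (TVar 2).
Definition shifted_by_4 : term := TAdd (TVar 3) (TVar 4).

Definition so_atom (p : term) : sform :=
  SAll1 1 (SOr (SNeg (memX 1)) (SMem 0 3 [TVar 1; TVar 0; p])).
Definition so_neg (a : sform) : sform :=
  SAll1 1 (SOr (SNeg (memX 1)) (SNeg (SEx2 0 1 (SAnd fSingle a)))).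
Definition so_or (a b : sform) : sform :=
  SEx2 1 1 (SEx2 2 1 (SAnd fUnion (SEx2 0 1 (SAnd fEqXZ (SAnd (SEx2 0 1 (SAnd fEqXY a)) b))))).
Definition so_next (a : sform) : sform := setk (TAdd (TVar 3) TOne) a.
Definition so_future (a : sform) : sform := SEx1 2 (setk shifted_by_2 a).
Definition so_glob (a : sform) : sform := SAll1 2 (setk shifted_by_2 a).
Definition so_until (a b : sform) : sform :=
  SEx1 2 (setk shifted_by_2
    (SAnd (SAll1 4 (SOr (SNeg (SLe (TAdd (TVar 4) TOne) (TVar 2)))
                        (SEx1 0 (SAnd (SEq (TVar 0) shifted_by_4) a)))) b)).
Definition so_release (a b : sform) : sform :=
  SAll1 2 (setk shifted_by_2
    (SOr (SEx1 4 (SAnd (SLe (TAdd (TVar 4) TOne) (TVar 2))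
                       (SEx1 0 (SAnd (SEq (TVar 0) shifted_by_4) a)))) b)).

Fixpoint ltl2so (phi : ltl) : sform :=
  match phi with
  | LAtom p => so_atom (num p)
  | LNeg f => so_neg (ltl2so f)
  | LAnd f g => SAnd (ltl2so f) (ltl2so g)
  | LOr f g => so_or (ltl2so f) (ltl2so g)
  | LX f => so_next (ltl2so f)
  | LF f => so_future (ltl2so f)
  | LG f => so_glob (ltl2so f)
  | LU f g => so_until (ltl2so f) (ltl2so g)
  | LR f g => so_release (ltl2so f) (ltl2so g)
  | LTilde f => SNeg (ltl2so f)
  end.

Lemma siff_classical : forall A B : Prop, ((~A \/ B) /\ (~B \/ A)) <-> (A <-> B).
Proof. intros A B. split; [tauto|]. intros H. destruct (classic A); tauto. Qed.

Lemma imp_classical : forall A B : Prop, (~A \/ B) <-> (A -> B).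
Proof. intros A B. split; [tauto|]. intros H. destruct (classic A); tauto. Qed.

Definition translates (phi : ltl) : Prop := forall e1 e2,
  sholds e1 e2 (ltl2so phi) <-> tsat phi (coded_team (e2 0 3) (e2 0 1) (e1 0)).

Lemma translates_atom : forall p, translates (LAtom p).
Proof.
  intros p e1 e2. simpl. unfold so_atom. simpl. setoid_rewrite teval_num. unfold upd1; simpl. split.
  - intros H t [i [Hi ->]]. destruct (H i) as [H1|H1]; [contradiction|].
    unfold suffix, coded_trace. apply pb_true. rewrite Nat.add_0_r. exact H1.
  - intros H v. destruct (classic (e2 0 1 [v])) as [Hv|Hv]; [right|left; auto].
    specialize (H (suffix (coded_trace (e2 0 3) v) (e1 0)) (ex_intro _ v (conj Hv eq_refl))).
    unfold suffix, coded_trace in H. rewrite pb_true, Nat.add_0_r in H. exact H.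
Qed.

(* Dual negation quantifies over the singleton subteams {t}, coded by the
   singleton index sets. *)
Lemma translates_neg : forall f, translates f -> translates (LNeg f).
Proof.
  intros f IH e1 e2. unfold translates in IH. simpl. unfold so_neg. simpl. setoid_rewrite IH. unfold upd1, upd2; simpl.
  set (R := e2 0 3). set (X := e2 0 1). set (k := e1 0). split.
  - intros H t [i [Hi ->]] Hs. destruct (H i) as [H1|H1]; [contradiction|]. apply H1.
    exists (fun l => l = [i]). split.
    + intros v0. apply siff_classical. split; intro E; [injection E; auto | subst; reflexivity].
    + eapply tsat_teq; [|exact Hs]. refine (coded_team_single R _ k i _).
      intros v0; split; intro E; [injection E; auto|subst; reflexivity].
  - intros H v. destruct (classic (X [v])) as [Hv|Hv]; [right|left; auto].
    intros [X' [HX Hs]]. apply (H (suffix (coded_trace R v) k)); [exists v; auto|].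
    eapply tsat_teq; [|exact Hs]. refine (teq_sym _ _ (coded_team_single R _ k v _)).
    intros v0; apply siff_classical; apply HX.
Qed.

(* A split of a coded team is coded by a split of its index set, and
   conversely any split of the team induces one of the index set. *)
Lemma translates_or : forall f g, translates f -> translates g -> translates (LOr f g).
Proof.
  intros f g IHf IHg e1 e2. unfold translates in IHf, IHg. simpl. unfold so_or. simpl.
  setoid_rewrite IHf. setoid_rewrite IHg. unfold upd1, upd2; simpl.
  set (R := e2 0 3). set (X := e2 0 1). set (k := e1 0). split.
  - intros [Y [Z [HU [X1 [HX1 [[X2 [HX2 Hf]] Hg]]]]]].
    exists (coded_team R Y k), (coded_team R Z k). split; [|split].
    + intros t; split.
      * intros [i [Hi ->]].
        destruct (proj1 (proj1 (siff_classical _ _) (HU i)) Hi) as [H1|H1]; [left|right]; exists i; auto.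
      * intros [[i [Hi ->]]|[i [Hi ->]]]; exists i; split; auto;
        apply (proj2 (proj1 (siff_classical _ _) (HU i))); auto.
    + refine (tsat_teq_impl _ _ _ _ Hf). apply coded_team_ext. intros v; apply siff_classical, HX2.
    + refine (tsat_teq_impl _ _ _ _ Hg). apply coded_team_ext. intros v; apply siff_classical, HX1.
  - intros [S [U [HSU [Hf Hg]]]].
    set (Y := fun l => X l /\ S (suffix (coded_trace R (hd 0 l)) k)).
    set (Z := fun l => X l /\ U (suffix (coded_trace R (hd 0 l)) k)).
    exists Y, Z. split; [|exists Z; split; [|split; [exists Y; split|]]].
    + intros v. apply siff_classical. split.
      * intros Hv. destruct (proj1 (HSU (suffix (coded_trace R v) k)) (ex_intro _ v (conj Hv eq_refl)));
        [left|right]; split; auto.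
      * intros [[H1 _]|[H1 _]]; auto.
    + intros v. apply siff_classical. tauto.
    + intros v. apply siff_classical. tauto.
    + refine (tsat_teq_impl _ _ _ _ Hf). intros t; split.
      * intros Ht. destruct (proj2 (HSU t) (or_introl Ht)) as [i [Hi ->]].
        exists i. split; auto. split; auto.
      * intros [i [[Hi HS] ->]]. exact HS.
    + refine (tsat_teq_impl _ _ _ _ Hg). intros t; split.
      * intros Ht. destruct (proj2 (HSU t) (or_intror Ht)) as [i [Hi ->]].
        exists i. split; auto. split; auto.
      * intros [i [[Hi HS] ->]]. exact HS.
Qed.

(* The temporal operators only move the time offset of the coded team. *)
Lemma translates_until : forall f g, translates f -> translates g -> translates (LU f g).
Proof.
  intros f g IHf IHg e1 e2. unfold translates in IHf, IHg. simpl. unfold so_until, setk, shifted_by_2, shifted_by_4. simpl.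
  setoid_rewrite IHf. setoid_rewrite IHg. unfold upd1, upd2; simpl.
  setoid_rewrite tsat_coded_shift. split.
  - intros [m [? [-> [? [-> [Hf Hg]]]]]]. exists m. split; auto.
    intros j Hj. destruct (Hf j) as [H1|[? [-> H1]]]; [lia|auto].
  - intros [m [Hg Hf]]. exists m, (e1 0). split; auto. exists (e1 0 + m). split; auto. split; auto.
    intros j. destruct (le_lt_dec m j); [left; lia|right; eauto].
Qed.

Lemma translates_release : forall f g, translates f -> translates g -> translates (LR f g).
Proof.
  intros f g IHf IHg e1 e2. unfold translates in IHf, IHg. simpl. unfold so_release, setk, shifted_by_2, shifted_by_4. simpl.
  setoid_rewrite IHf. setoid_rewrite IHg. unfold upd1, upd2; simpl.
  setoid_rewrite tsat_coded_shift. split.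
  - intros H m. destruct (H m) as [? [-> [? [-> [[j [Hj [? [-> Hf]]]]|Hg]]]]]; [right|left; auto].
    exists j. split; [lia|auto].
  - intros H m. exists (e1 0). split; auto. exists (e1 0 + m). split; auto.
    destruct (H m) as [Hg|[j [Hj Hf]]]; [right; auto|left]. exists j. split; [lia|eauto].
Qed.

Theorem ltl2so_correct : forall phi e1 e2,
  sholds e1 e2 (ltl2so phi) <-> tsat phi (coded_team (e2 0 3) (e2 0 1) (e1 0)).
Proof.
  intros phi; change (translates phi).
  induction phi; intros e1 e2; unfold translates in *.
  - apply translates_atom.
  - apply translates_neg; auto.
  - simpl. rewrite IHphi1, IHphi2. tauto.
  - apply translates_or; auto.
  - simpl. unfold so_next, setk. simpl. setoid_rewrite IHphi. unfold upd1, upd2; simpl.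
    rewrite tsat_coded_shift. split; [intros [? [-> [? [-> H]]]]; auto | intros H; eauto].
  - simpl. unfold so_future, setk, shifted_by_2. simpl. setoid_rewrite IHphi.
    unfold upd1, upd2; simpl. setoid_rewrite tsat_coded_shift.
    split; [intros [m [? [-> [? [-> H]]]]]; eauto | intros [m H]; exists m; eauto].
  - simpl. unfold so_glob, setk, shifted_by_2. simpl. setoid_rewrite IHphi.
    unfold upd1, upd2; simpl. setoid_rewrite tsat_coded_shift.
    split; [intros H m; destruct (H m) as [? [-> [? [-> H1]]]]; auto | intros H m; eauto].
  - apply translates_until; auto.
  - apply translates_release; auto.
  - simpl. rewrite IHphi. tauto.
Qed.

(** * Restricting a team to finitely many propositions *)

(* [restrict B t] forgets all propositions [>= B]; [atom_bound phi] bounds the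
   propositions occurring in [phi], which therefore cannot tell [T] and its
   restriction apart. *)
Definition restrict (B : nat) (t : trace) : trace := fun n p => t n p && (p <? B).
Definition img (r : trace -> trace) (T : team) : team := fun s => exists t, T t /\ s = r t.

Fixpoint atom_bound (phi : ltl) : nat :=
  match phi with
  | LAtom p => S p
  | LNeg f | LX f | LF f | LG f | LTilde f => atom_bound f
  | LAnd f g | LOr f g | LU f g | LR f g => Nat.max (atom_bound f) (atom_bound g)
  end.

Lemma img_shift : forall B T k,
  teq (team_shift (img (restrict B) T) k) (img (restrict B) (team_shift T k)).
Proof.
  intros B T k s. unfold team_shift, img. split.
  - intros [u [[t [Ht ->]] ->]]. exists (suffix t k). split; [exists t; auto|]. reflexivity.
  - intros [u [[t [Ht ->]] ->]]. exists (restrict B t). split; [exists t; auto|]. reflexivity.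
Qed.

Lemma img_single : forall B t, teq (img (restrict B) (singleton t)) (singleton (restrict B t)).
Proof.
  intros B t s. unfold img, singleton.
  split; [intros [u [-> ->]]; auto | intros ->; exists t; auto].
Qed.

Definition restrict_invariant (phi : ltl) (B : nat) : Prop :=
  forall T, tsat phi T <-> tsat phi (img (restrict B) T).

Lemma restrict_invariant_shift : forall phi B, restrict_invariant phi B -> forall T k,
  tsat phi (team_shift T k) <-> tsat phi (team_shift (img (restrict B) T) k).
Proof.
  intros phi B H T k. rewrite (H (team_shift T k)). apply tsat_teq. exact (teq_sym _ _ (img_shift B T k)).
Qed.

(* Splits of [T] and of its image correspond to each other. *)
Lemma restrict_invariant_or : forall f g B,
  restrict_invariant f B -> restrict_invariant g B -> restrict_invariant (LOr f g) B.
Proof.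
  intros f g B IHf IHg T. simpl. split.
  - intros [S [U [HSU [Hf Hg]]]]. exists (img (restrict B) S), (img (restrict B) U).
    split; [|split; [apply (proj1 (IHf S)) | apply (proj1 (IHg U))]; auto].
    intros s. unfold img. split.
    + intros [t [Ht ->]]. destruct (proj1 (HSU t) Ht); [left|right]; eauto.
    + intros [[t [Ht ->]]|[t [Ht ->]]]; exists t; split; auto; apply HSU; auto.
  - intros [S [U [HSU [Hf Hg]]]].
    exists (fun t => T t /\ S (restrict B t)), (fun t => T t /\ U (restrict B t)). split; [|split].
    + intros t. split.
      * intros Ht. destruct (proj1 (HSU (restrict B t)) (ex_intro _ t (conj Ht eq_refl)));
        [left|right]; auto.
      * intros [[H1 _]|[H1 _]]; auto.
    + apply (proj2 (IHf _)). refine (tsat_teq_impl _ _ _ _ Hf). intros s; unfold img; split.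
      * intros Hs. destruct (proj2 (HSU s) (or_introl Hs)) as [t [Ht ->]]. exists t; repeat split; auto.
      * intros [t [[Ht HS] ->]]. exact HS.
    + apply (proj2 (IHg _)). refine (tsat_teq_impl _ _ _ _ Hg). intros s; unfold img; split.
      * intros Hs. destruct (proj2 (HSU s) (or_intror Hs)) as [t [Ht ->]]. exists t; repeat split; auto.
      * intros [t [[Ht HS] ->]]. exact HS.
Qed.

Theorem restrict_props_correct : forall phi B, atom_bound phi <= B -> restrict_invariant phi B.
Proof.
  induction phi; intros B Hb; simpl in Hb; unfold restrict_invariant in *.
  - intros T. simpl. split.
    + intros H s [t [Ht ->]]. unfold restrict. rewrite (H t Ht). simpl. apply Nat.ltb_lt. lia.
    + intros H t Ht. specialize (H (restrict B t) (ex_intro _ t (conj Ht eq_refl))).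
      unfold restrict in H. apply andb_true_iff in H. tauto.
  - intros T. simpl. split.
    + intros H s [t [Ht ->]] Hs. apply (H t Ht). apply (IHphi B); auto.
      exact (tsat_teq_impl _ _ _ (teq_sym _ _ (img_single B t)) Hs).
    + intros H t Ht Hs. apply (H (restrict B t) (ex_intro _ t (conj Ht eq_refl))).
      apply (tsat_teq_impl _ _ _ (img_single B t)). rewrite <- (IHphi B) by auto. exact Hs.
  - intros T. simpl. rewrite (IHphi1 B), (IHphi2 B) by lia. tauto.
  - apply restrict_invariant_or; [exact (IHphi1 B ltac:(lia)) | exact (IHphi2 B ltac:(lia))].
  - intros T. exact (restrict_invariant_shift phi B (IHphi B Hb) T 1).
  - intros T. simpl. setoid_rewrite (restrict_invariant_shift phi B (IHphi B Hb) T). tauto.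
  - intros T. simpl. setoid_rewrite (restrict_invariant_shift phi B (IHphi B Hb) T). tauto.
  - intros T. simpl.
    setoid_rewrite (restrict_invariant_shift phi1 B (IHphi1 B ltac:(lia)) T).
    setoid_rewrite (restrict_invariant_shift phi2 B (IHphi2 B ltac:(lia)) T). tauto.
  - intros T. simpl.
    setoid_rewrite (restrict_invariant_shift phi1 B (IHphi1 B ltac:(lia)) T).
    setoid_rewrite (restrict_invariant_shift phi2 B (IHphi2 B ltac:(lia)) T). tauto.
  - intros T. simpl. rewrite (IHphi B Hb T). tauto.
Qed.

Lemma restrict_bounded : forall B t n p, restrict B t n p = true -> p < B.
Proof. intros B t n p H. unfold restrict in H. apply andb_true_iff in H. apply Nat.ltb_lt; tauto. Qed.

Lemma restrict_ult_periodic : forall B t, ult_periodic t -> ult_periodic (restrict B t).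
Proof.
  intros B t [c [d [Hc [Hd H]]]]. exists c, d. split; auto. split; auto.
  intros n Hn. unfold restrict. rewrite (H n Hn). reflexivity.
Qed.

Lemma restrict_ult_constant : forall B t, ult_constant t -> ult_constant (restrict B t).
Proof. intros B t [i H]. exists i. intros n. unfold restrict. rewrite (H n). reflexivity. Qed.

Lemma ult_constant_periodic : forall t, ult_constant t -> ult_periodic t.
Proof.
  intros t [i H]. exists (S i), 1. split; [lia|]. split; [lia|]. intros n Hn.
  replace n with (i + (n - i)) by lia. rewrite H.
  replace (i + (n - i) + 1) with (i + (n - i + 1)) by lia. rewrite H. reflexivity.
Qed.

(** * Enumerating the ultimately periodic traces over finitely many propositions *)

Lemma bits_exist : forall M (f : nat -> bool), exists x, forall k, k < M -> Nat.testbit x k = f k.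
Proof.
  induction M; intros f.
  - exists 0. intros; lia.
  - destruct (IHM (fun k => f (S k))) as [x Hx]. exists (2 * x + Nat.b2n (f 0)).
    intros [|k] Hk; [apply Nat.testbit_0_r|]. rewrite Nat.testbit_succ_r. apply Hx. lia.
Qed.

(* Code [i] describes a preperiod [c], a period [d] and the table of the first
   [c + d] letters as the bits of a number. *)
Definition period_index (c d n : nat) : nat := if n <? c then n else c + (n - c) mod d.

Definition enum_trace (B i : nat) : trace :=
  let (c, x) := Cantor.of_nat i in
  let (d, tab) := Cantor.of_nat x in
  fun n p => if p <? B then Nat.testbit tab (period_index c d n * B + p) else false.

Lemma periodic_mod : forall (t : trace) c d, 0 < d -> (forall n, c <= n -> t n = t (n + d)) ->
  forall m, t (c + m) = t (c + m mod d).
Proof.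
  intros t c d Hd H m. rewrite (Nat.div_mod_eq m d) at 1.
  generalize (m / d) as q. induction q.
  - rewrite Nat.mul_0_r. reflexivity.
  - rewrite <- IHq. replace (c + (d * S q + m mod d)) with ((c + (d * q + m mod d)) + d) by lia.
    symmetry. apply H. lia.
Qed.

Lemma enum_surj : forall B t, ult_periodic t -> (forall n p, t n p = true -> p < B) ->
  exists i, enum_trace B i = t.
Proof.
  intros B t [c [d [Hc [Hd H]]]] Hb.
  destruct (bits_exist ((c + d) * B) (fun k => t (k / B) (k mod B))) as [x Hx].
  exists (Cantor.to_nat (c, Cantor.to_nat (d, x))).
  unfold enum_trace. rewrite !Cantor.cancel_of_to.
  extensionality n. extensionality p.
  destruct (p <? B) eqn:Ep.
  - apply Nat.ltb_lt in Ep. set (j := period_index c d n).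
    assert (Hj : j < c + d).
    { unfold j, period_index. destruct (n <? c) eqn:E; [apply Nat.ltb_lt in E; lia|].
      pose proof (Nat.mod_upper_bound (n - c) d ltac:(lia)). lia. }
    rewrite Hx.
    2:{ assert ((j + 1) * B <= (c + d) * B) by (apply Nat.mul_le_mono_r; lia). lia. }
    assert (Hdiv : (j * B + p) / B = j).
    { rewrite Nat.div_add_l by lia. rewrite Nat.div_small by lia. lia. }
    assert (Hmod : (j * B + p) mod B = p).
    { pose proof (Nat.div_mod_eq (j * B + p) B). rewrite Hdiv in H0. lia. }
    rewrite Hdiv, Hmod. unfold j, period_index.
    destruct (n <? c) eqn:E; [reflexivity|]. apply Nat.ltb_ge in E.
    rewrite <- (periodic_mod t c d Hd H (n - c)). replace (c + (n - c)) with n by lia. reflexivity.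
  - apply Nat.ltb_ge in Ep. destruct (t n p) eqn:E; auto. apply Hb in E. lia.
Qed.

Definition rel_of_enum (f : nat -> trace) : list nat -> Prop :=
  fun l => match l with [i; n; p] => f i n p = true | _ => False end.
Definition set_of (P : nat -> Prop) : list nat -> Prop :=
  fun l => match l with [i] => P i | _ => False end.

Lemma coded_trace_enum : forall f i, coded_trace (rel_of_enum f) i = f i.
Proof. intros f i. unfold coded_trace, rel_of_enum. extensionality n; extensionality p. apply pb_bool. Qed.

Lemma coded_team_enum : forall (f : nat -> trace) (T : team), (forall t, T t -> exists i, f i = t) ->
  teq T (coded_team (rel_of_enum f) (set_of (fun i => T (f i))) 0).
Proof.
  intros f T Hf t. split.
  - intros Ht. destruct (Hf t Ht) as [i <-]. exists i. split; [exact Ht|].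
    rewrite coded_trace_enum. reflexivity.
  - intros [i [Hi ->]]. simpl in Hi. change (suffix ?t 0) with t. rewrite coded_trace_enum. exact Hi.
Qed.

Theorem countsat_coded : forall phi, CountSat phi <-> exists R X, tsat phi (coded_team R X 0).
Proof.
  intros phi. split.
  - intros [T [[f Hf] Hs]]. exists (rel_of_enum f), (set_of (fun i => T (f i))).
    exact (tsat_teq_impl _ _ _ (coded_team_enum f T Hf) Hs).
  - intros [R [X Hs]]. exists (coded_team R X 0). split; auto.
    exists (coded_trace R). intros t [i [_ ->]]. exists i. reflexivity.
Qed.

Definition trace_class (C : trace -> Prop) : Prop := C = ult_periodic \/ C = ult_constant.

Lemma trace_class_restrict : forall C B t, trace_class C -> C t -> C (restrict B t).
Proof. intros C B t [->| ->]; [apply restrict_ult_periodic|apply restrict_ult_constant]. Qed.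

Lemma trace_class_periodic : forall C t, trace_class C -> C t -> ult_periodic t.
Proof. intros C t [->| ->]; auto using ult_constant_periodic. Qed.

(* Restricted satisfiability: restrict to the propositions of [phi], after
   which the team is a subteam of the enumeration [enum_trace B]. *)
Theorem csat_coded : forall C phi, trace_class C ->
  (CSat C phi <->
   exists R X, (forall i, X [i] -> C (coded_trace R i)) /\ tsat phi (coded_team R X 0)).
Proof.
  intros C phi HC. split.
  - intros [T Hs]. set (B := atom_bound phi).
    rewrite (restrict_props_correct phi B ltac:(unfold B; lia) (fun t => T t /\ C t)) in Hs.
    set (T' := img (restrict B) (fun t => T t /\ C t)) in *.
    exists (rel_of_enum (enum_trace B)), (set_of (fun i => T' (enum_trace B i))). split.
    + intros i Hi. simpl in Hi. rewrite coded_trace_enum. destruct Hi as [t [[_ Ht] ->]].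
      apply trace_class_restrict; auto.
    + refine (tsat_teq_impl _ _ _ (coded_team_enum _ _ _) Hs).
      intros t [t0 [[_ H1] ->]]. apply enum_surj; [|apply restrict_bounded].
      apply (trace_class_periodic C); auto. apply trace_class_restrict; auto.
  - intros [R [X [HX Hs]]]. exists (coded_team R X 0).
    refine (tsat_teq_impl _ _ _ _ Hs). intros t. split.
    + intros Ht. split; auto. destruct Ht as [i [Hi ->]]. apply HX; auto.
    + intros [Ht _]. exact Ht.
Qed.

Definition is_path (W root : nat) (Rel : nat -> nat -> Prop) (pi : nat -> nat) : Prop :=
  pi 0 = root /\ forall n, pi n < W /\ Rel (pi n) (pi (S n)).
Definition path_trace (Eta : nat -> nat -> Prop) (pi : nat -> nat) : trace :=
  fun n p => pb (Eta (pi n) p).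
Definition wf_frame (W root : nat) (Rel Eta : nat -> nat -> Prop) : Prop :=
  0 < W /\ root < W /\ (forall w, w < W -> exists v, v < W /\ Rel w v) /\
  (exists B, forall w p, w < W -> Eta w p -> p < B).

(* The coded team is exactly the C-part of the trace team of the structure. *)
Definition kripke_coded (C : trace -> Prop) (R X : list nat -> Prop) (W root : nat)
  (Rel Eta : nat -> nat -> Prop) : Prop :=
  wf_frame W root Rel Eta /\
  (forall i, X [i] ->
     (exists pi, is_path W root Rel pi /\ coded_trace R i = path_trace Eta pi) /\
     C (coded_trace R i)) /\
  (forall pi, is_path W root Rel pi -> C (path_trace Eta pi) ->
     exists i, X [i] /\ coded_trace R i = path_trace Eta pi).

Lemma cfinsat_to_coded : forall C phi, trace_class C -> CFinSat C phi ->
  exists R X W root Rel Eta, kripke_coded C R X W root Rel Eta /\ tsat phi (coded_team R X 0).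
Proof.
  intros C phi HC [K [HK Hs]]. destruct HK as [HW [Hr [Hser [B HB]]]].
  set (T := fun t => teamK K t /\ C t).
  exists (rel_of_enum (enum_trace B)), (set_of (fun i => T (enum_trace B i))),
    (kW K), (kroot K), (fun a b => kR K a b = true), (fun w p => keta K w p = true).
  assert (Hpt : forall pi, path_trace (fun w p => keta K w p = true) pi = (fun n => keta K (pi n))).
  { intros pi. unfold path_trace. extensionality n; extensionality p. apply pb_bool. }
  assert (Hsurj : forall t, T t -> exists i, enum_trace B i = t).
  { intros t [[pi [[H0 Hp] ->]] Ht]. apply enum_surj. apply (trace_class_periodic C); auto.
    intros n p Hnp. apply (HB (pi n)); auto. apply Hp. }
  split; [split; [|split]|].
  - repeat split; auto. exists B; auto.
  - intros i [[pi [Hpi Ht]] Hc]. split; [|rewrite coded_trace_enum; auto].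
    exists pi. split; [exact Hpi|]. rewrite coded_trace_enum, Hpt. exact Ht.
  - intros pi Hpi Hc. rewrite Hpt in Hc.
    destruct (Hsurj (fun n => keta K (pi n))) as [i Hi]; [split; [exists pi; split|]; auto|].
    exists i. split; [simpl; rewrite Hi; split; auto; exists pi; split; auto|].
    rewrite coded_trace_enum, Hpt. exact Hi.
  - exact (tsat_teq_impl _ _ _ (coded_team_enum _ _ Hsurj) Hs).
Qed.

Lemma coded_to_cfinsat : forall C phi,
  (exists R X W root Rel Eta, kripke_coded C R X W root Rel Eta /\ tsat phi (coded_team R X 0)) ->
  CFinSat C phi.
Proof.
  intros C phi [R [X [W [root [Rel [Eta [[[HW [Hr [Hser [B HB]]]] [HA HBc]] Hs]]]]]]].
  set (K := mkKripke W (fun a b => pb (Rel a b)) (fun w p => pb (Eta w p)) root).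
  assert (Hpath : forall pi, kpath K pi <-> is_path W root Rel pi).
  { intros pi. unfold kpath, is_path; simpl. split; intros [H0 Hp]; split; auto;
    intros n; destruct (Hp n); split; auto; apply pb_true; auto. }
  exists K. split.
  - unfold wf_kripke; simpl. split; auto. split; auto. split.
    + intros w Hw. destruct (Hser w Hw) as [v [Hv HR]]. exists v. split; auto. apply pb_true; auto.
    + exists B. intros w p Hw He. rewrite pb_true in He. eauto.
  - refine (tsat_teq_impl _ _ _ _ Hs). intros t. split.
    + intros [i [Hi ->]]. destruct (HA i Hi) as [[pi [Hpi Ht]] Hc]. split; auto.
      exists pi. split; [apply Hpath; auto | exact Ht].
    + intros [[pi [Hpi ->]] Hc]. apply Hpath in Hpi.
      destruct (HBc pi Hpi Hc) as [i [Hi Ht]]. exists i. split; [exact Hi | symmetry; exact Ht].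
Qed.

Theorem cfinsat_coded : forall C phi, trace_class C ->
  (CFinSat C phi <->
   exists R X W root Rel Eta, kripke_coded C R X W root Rel Eta /\ tsat phi (coded_team R X 0)).
Proof. intros C phi HC. split; [apply cfinsat_to_coded; auto|apply coded_to_cfinsat]. Qed.

(** * Second-order definitions of the trace classes and of Kripke structures *)

Definition sImp (a b : sform) : sform := SOr (SNeg a) b.

(* A class-defining formula [CF A] is parameterised by a binary formula
   scheme [A tn tp] ("proposition tp holds at time tn" of some trace); it may
   use the first-order variables 10..13, which [A] must not depend on. *)
Definition so_periodic (A : term -> term -> sform) : sform :=
  SEx1 10 (SEx1 11 (SAnd (SLe TOne (TVar 10)) (SAnd (SLe TOne (TVar 11))
    (SAll1 12 (sImp (SLe (TVar 10) (TVar 12))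
      (SAll1 13 (siff (A (TVar 12) (TVar 13)) (A (TAdd (TVar 12) (TVar 11)) (TVar 13))))))))).
Definition so_constant (A : term -> term -> sform) : sform :=
  SEx1 10 (SAll1 12 (SAll1 13 (siff (A (TAdd (TVar 10) (TVar 12)) (TVar 13)) (A (TVar 10) (TVar 13))))).

Definition tcl : term -> Prop := term_closed [13; 12; 11; 10].

(* Under [e1], [e2] the scheme [A] denotes the binary relation [Asem],
   whatever the values of the variables 10.. are. *)
Definition denotes (A : term -> term -> sform) (e1 : nat -> nat) (e2 : nat -> nat -> list nat -> Prop)
  (Asem : nat -> nat -> Prop) : Prop :=
  forall e1', (forall x, x < 10 -> e1' x = e1 x) -> forall tn tp, tcl tn -> tcl tp ->
    (sholds e1' e2 (A tn tp) <-> Asem (teval e1' tn) (teval e1' tp)).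

Definition rel_trace (Asem : nat -> nat -> Prop) : trace := fun n p => pb (Asem n p).

Lemma rel_trace_eq : forall Asem n m, rel_trace Asem n = rel_trace Asem m <-> forall p, Asem n p <-> Asem m p.
Proof.
  intros Asem n m. unfold rel_trace. split.
  - intros H p. assert (E := f_equal (fun f => f p) H). simpl in E.
    split; intro Hp; [rewrite <- pb_true, <- E; apply pb_true; auto | rewrite <- pb_true, E; apply pb_true; auto].
  - intros H. extensionality p. apply pb_ext. apply H.
Qed.

Ltac simpl_upd := unfold upd1; simpl.

Lemma upd1_eq : forall e i v, upd1 e i v i = v.
Proof. intros. unfold upd1. rewrite Nat.eqb_refl. reflexivity. Qed.

Lemma upd1_ne : forall e i v x, x <> i -> upd1 e i v x = e x.
Proof. intros e i v x H. unfold upd1. destruct (Nat.eqb_spec x i); congruence. Qed.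

Lemma upd2_ne : forall e j n X j' n', (j' <> j \/ n' <> n) -> upd2 e j n X j' n' = e j' n'.
Proof.
  intros e j n X j' n' H. unfold upd2.
  destruct (Nat.eqb_spec j' j), (Nat.eqb_spec n' n); simpl; auto; tauto.
Qed.
Lemma upd2_eq : forall e j n X, upd2 e j n X j n = X.
Proof. intros. unfold upd2. rewrite !Nat.eqb_refl. reflexivity. Qed.

Lemma teval_upd_notin : forall B t e i v, term_closed B t -> ~ In i B -> teval (upd1 e i v) t = teval e t.
Proof.
  intros B t e i v. induction t; simpl; intros H Hi; try reflexivity.
  - unfold upd1. destruct (Nat.eqb_spec n i); [subst; contradiction|reflexivity].
  - rewrite IHt1, IHt2; tauto.
  - rewrite IHt1, IHt2; tauto.
Qed.

Ltac solve_tcl := unfold tcl; simpl; repeat split; repeat (first [left; reflexivity | right]).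
Ltac agree_below := intros ?x ?Hx; repeat rewrite upd1_ne by lia; reflexivity.

Definition defines_class (CF : (term -> term -> sform) -> sform) (C : trace -> Prop) : Prop :=
  forall A e1 e2 Asem, denotes A e1 e2 Asem -> (sholds e1 e2 (CF A) <-> C (rel_trace Asem)).

Lemma so_periodic_defines : defines_class so_periodic ult_periodic.
Proof.
  intros A e1 e2 Asem HA. unfold denotes in HA.
  assert (E : forall c d n p,
    (sholds (upd1 (upd1 (upd1 (upd1 e1 10 c) 11 d) 12 n) 13 p) e2 (A (TVar 12) (TVar 13)) <-> Asem n p) /\
    (sholds (upd1 (upd1 (upd1 (upd1 e1 10 c) 11 d) 12 n) 13 p) e2 (A (TAdd (TVar 12) (TVar 11)) (TVar 13))
       <-> Asem (n + d) p)).
  { intros c d n p. split; (rewrite HA; [| agree_below | solve_tcl | solve_tcl]); simpl_upd; reflexivity. }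
  unfold so_periodic, sImp, siff. cbn [sholds teval]. unfold upd1 at 1 2 3 4 5 6 7 8; simpl.
  split.
  - intros [c [d [Hc [Hd H]]]].
    exists c, d. split; [lia|]. split; [lia|]. intros n Hn. apply rel_trace_eq. intros p.
    destruct (H n) as [H1|H1]; [exfalso; apply H1; simpl_upd; lia|].
    specialize (H1 p). apply siff_classical in H1. destruct (E c d n p) as [E1 E2].
    rewrite <- E1, <- E2. exact H1.
  - intros [c [d [Hc [Hd H]]]]. exists c, d. split; [lia|]. split; [lia|].
    intros n. destruct (le_lt_dec c n) as [Hn|Hn]; [right|left; simpl_upd; lia].
    intros p. apply siff_classical. destruct (E c d n p) as [E1 E2].
    rewrite E1, E2. apply rel_trace_eq. apply H. auto.
Qed.

Lemma so_constant_defines : defines_class so_constant ult_constant.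
Proof.
  intros A e1 e2 Asem HA. unfold denotes in HA.
  assert (E : forall c n p,
    (sholds (upd1 (upd1 (upd1 e1 10 c) 12 n) 13 p) e2 (A (TAdd (TVar 10) (TVar 12)) (TVar 13)) <-> Asem (c + n) p) /\
    (sholds (upd1 (upd1 (upd1 e1 10 c) 12 n) 13 p) e2 (A (TVar 10) (TVar 13)) <-> Asem c p)).
  { intros c n p. split; (rewrite HA; [| agree_below | solve_tcl | solve_tcl]); simpl_upd; reflexivity. }
  unfold so_constant, siff. cbn [sholds].
  split.
  - intros [c H]. exists c. intros n. apply rel_trace_eq. intros p.
    specialize (H n p). apply siff_classical in H. destruct (E c n p) as [E1 E2].
    rewrite <- E1, <- E2. exact H.
  - intros [c H]. exists c. intros n p. apply siff_classical. destruct (E c n p) as [E1 E2].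
    rewrite E1, E2. apply rel_trace_eq. apply H.
Qed.

(* The two schemes used: the coded trace with index (variable) 1, and the
   trace induced by the path graph (3,2) through the labelling (2,2). *)
Definition acc_coded (tn tp : term) : sform := SMem 0 3 [TVar 1; tn; tp].
Definition acc_path (tn tp : term) : sform :=
  SEx1 14 (SAnd (SMem 3 2 [tn; TVar 14]) (SMem 2 2 [TVar 14; tp])).

Lemma acc_coded_denotes : forall e1 e2, denotes acc_coded e1 e2 (fun n p => e2 0 3 [e1 1; n; p]).
Proof.
  intros e1 e2 e1' He tn tp _ _. unfold acc_coded. cbn [sholds map teval]. rewrite He by lia. reflexivity.
Qed.

Lemma acc_path_denotes : forall e1 e2, denotes acc_path e1 e2 (fun n p => exists w, e2 3 2 [n; w] /\ e2 2 2 [w; p]).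
Proof.
  intros e1 e2 e1' He tn tp Hn Hp. unfold acc_path. cbn [sholds map teval].
  assert (E1 : forall v, teval (upd1 e1' 14 v) tn = teval e1' tn)
    by (intros; apply (teval_upd_notin _ tn e1' 14 _ Hn); simpl; lia).
  assert (E2 : forall v, teval (upd1 e1' 14 v) tp = teval e1' tp)
    by (intros; apply (teval_upd_notin _ tp e1' 14 _ Hp); simpl; lia).
  assert (E3 : forall v, upd1 e1' 14 v 14 = v) by (intros; unfold upd1; simpl; reflexivity).
  split; intros [v [H1 H2]]; exists v; rewrite ?E1, ?E2, ?E3 in *; auto.
Qed.

(* A finite Kripke structure is coded by its number of worlds (variable 6),
   its root (7), accessibility (1,2) and labelling (2,2); a path by the graph
   (3,2) of a function.  Variables 8..10 are local. *)
Definition lt_ (a b : nat) : sform := SLe (TAdd (TVar a) TOne) (TVar b).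
Definition fRel (a b : nat) : sform := SMem 1 2 [TVar a; TVar b].
Definition fEta (a b : nat) : sform := SMem 2 2 [TVar a; TVar b].
Definition fPi (a b : term) : sform := SMem 3 2 [a; b].

Definition so_wf_frame : sform := SAnd (SLe TOne (TVar 6)) (SAnd (lt_ 7 6) (SAnd
  (SAll1 8 (sImp (lt_ 8 6) (SEx1 9 (SAnd (lt_ 9 6) (fRel 8 9)))))
  (SEx1 8 (SAll1 9 (SAll1 10 (sImp (SAnd (lt_ 9 6) (fEta 9 10)) (lt_ 10 8))))))).

Lemma so_wf_frame_sem : forall e1 e2, sholds e1 e2 so_wf_frame <->
  wf_frame (e1 6) (e1 7) (fun a b => e2 1 2 [a; b]) (fun a b => e2 2 2 [a; b]).
Proof.
  intros e1 e2. unfold so_wf_frame, lt_, fRel, fEta, sImp, wf_frame. cbn [sholds map teval]. simpl_upd.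
  setoid_rewrite imp_classical. split.
  - intros [H1 [H2 [H3 [B H4]]]]. split; [lia|]. split; [lia|]. split.
    + intros w Hw. destruct (H3 w ltac:(lia)) as [v [Hv HR]]. exists v. split; [lia|auto].
    + exists B. intros w p Hw He. specialize (H4 w p ltac:(split; [lia|auto])). lia.
  - intros [H1 [H2 [H3 [B H4]]]]. split; [lia|]. split; [lia|]. split.
    + intros w Hw. destruct (H3 w ltac:(lia)) as [v [Hv HR]]. exists v. split; [lia|auto].
    + exists B. intros w p [Hw He]. specialize (H4 w p ltac:(lia) He). lia.
Qed.

Definition so_path : sform :=
  SAnd (SAll1 8 (SEx1 9 (fPi (TVar 8) (TVar 9))))
  (SAnd (SAll1 8 (SAll1 9 (SAll1 10
     (sImp (SAnd (fPi (TVar 8) (TVar 9)) (fPi (TVar 8) (TVar 10))) (SEq (TVar 9) (TVar 10))))))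
  (SAnd (fPi TZero (TVar 7))
        (SAll1 8 (SAll1 9 (sImp (fPi (TVar 8) (TVar 9))
           (SAnd (lt_ 9 6) (SEx1 10 (SAnd (fPi (TAdd (TVar 8) TOne) (TVar 10)) (fRel 9 10))))))))).

Definition graph (pi : nat -> nat) : list nat -> Prop :=
  fun l => match l with [n; w] => pi n = w | _ => False end.

Lemma so_path_sem : forall e1 e2, sholds e1 e2 so_path <->
  exists pi, is_path (e1 6) (e1 7) (fun a b => e2 1 2 [a; b]) pi /\ forall n w, e2 3 2 [n; w] <-> pi n = w.
Proof.
  intros e1 e2. unfold so_path, lt_, fRel, fPi, sImp, is_path. cbn [sholds map teval]. simpl_upd.
  setoid_rewrite imp_classical. split.
  - intros [Htot [Hfun [H0 Hstep]]].
    set (pi := fun n => proj1_sig (constructive_indefinite_description _ (Htot n))).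
    assert (Hpi : forall n, e2 3 2 [n; pi n]) by (intros n; exact (proj2_sig (constructive_indefinite_description _ (Htot n)))).
    assert (Hg : forall n w, e2 3 2 [n; w] <-> pi n = w).
    { intros n w. split; [intros H; apply (Hfun n); auto | intros <-; auto]. }
    exists pi. split; [|exact Hg]. split.
    + apply Hg; exact H0.
    + intros n. destruct (Hstep n (pi n) (Hpi n)) as [Hlt [v [Hv HR]]].
      split; [lia|]. replace (n + 1) with (S n) in Hv by lia. apply Hg in Hv. subst v. exact HR.
  - intros [pi [[H0 Hp] Hg]]. split; [|split; [|split]].
    + intros n. exists (pi n). apply Hg. reflexivity.
    + intros n a b [Ha Hb]. apply Hg in Ha, Hb. congruence.
    + apply Hg. exact H0.
    + intros n w Hw. apply Hg in Hw. subst w. destruct (Hp n) as [Hlt HR]. split; [lia|].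
      exists (pi (S n)). split; auto. apply Hg. f_equal. lia.
Qed.

Definition so_trace_eq : sform :=
  SAll1 8 (SAll1 9 (siff (SMem 0 3 [TVar 1; TVar 8; TVar 9])
  (SEx1 10 (SAnd (fPi (TVar 8) (TVar 10)) (fEta 10 9))))).

Lemma so_trace_eq_sem : forall e1 e2 pi, (forall n w, e2 3 2 [n; w] <-> pi n = w) ->
  (sholds e1 e2 so_trace_eq <-> coded_trace (e2 0 3) (e1 1) = path_trace (fun a b => e2 2 2 [a; b]) pi).
Proof.
  intros e1 e2 pi Hg. unfold so_trace_eq, fPi, fEta, siff. cbn [sholds map teval]. simpl_upd.
  setoid_rewrite siff_classical. unfold coded_trace, path_trace. split.
  - intros H. extensionality n; extensionality p. apply pb_ext. rewrite (H n p). split.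
    + intros [w [Hw He]]. apply Hg in Hw. subst; auto.
    + intros He. exists (pi n). split; auto. apply Hg; auto.
  - intros H n p. assert (E := f_equal (fun f => f n p) H). simpl in E.
    split.
    + intros HR. assert (HE : e2 2 2 [pi n; p]) by (rewrite <- pb_true, <- E; apply pb_true; auto).
      exists (pi n). split; auto. apply Hg; auto.
    + intros [w [Hw He]]. apply Hg in Hw. subst w. rewrite <- pb_true, E. apply pb_true; auto.
Qed.

Definition so_team_in_kripke (CF : (term -> term -> sform) -> sform) : sform :=
  SAll1 1 (sImp (memX 1) (SAnd (SEx2 3 2 (SAnd so_path so_trace_eq)) (CF acc_coded))).
Definition so_kripke_in_team (CF : (term -> term -> sform) -> sform) : sform :=
  SAll2 3 2 (sImp so_path (sImp (CF acc_path) (SEx1 1 (SAnd (memX 1) so_trace_eq)))).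

Lemma so_team_in_kripke_sem : forall CF C, defines_class CF C -> forall e1 e2,
  sholds e1 e2 (so_team_in_kripke CF) <->
  forall i, e2 0 1 [i] -> (exists pi, is_path (e1 6) (e1 7) (fun a b => e2 1 2 [a; b]) pi /\
      coded_trace (e2 0 3) i = path_trace (fun a b => e2 2 2 [a; b]) pi) /\ C (coded_trace (e2 0 3) i).
Proof.
  intros CF C Hok e1 e2. unfold so_team_in_kripke, sImp, memX. cbn [sholds map teval].
  assert (HC : forall i, sholds (upd1 e1 1 i) e2 (CF acc_coded) <-> C (coded_trace (e2 0 3) i)).
  { intros i. rewrite (Hok acc_coded _ e2 _ (acc_coded_denotes (upd1 e1 1 i) e2)). rewrite upd1_eq. reflexivity. }
  assert (HP : forall i, (exists X, sholds (upd1 e1 1 i) (upd2 e2 3 2 X) (SAnd so_path so_trace_eq)) <->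
     (exists pi, is_path (e1 6) (e1 7) (fun a b => e2 1 2 [a; b]) pi /\
      coded_trace (e2 0 3) i = path_trace (fun a b => e2 2 2 [a; b]) pi)).
  { intros i. cbn [sholds]. split.
    - intros [X [HPa HT]]. apply so_path_sem in HPa. destruct HPa as [pi [Hpi Hg]].
      rewrite upd2_eq in Hg. rewrite (so_trace_eq_sem _ _ pi) in HT by (rewrite upd2_eq; exact Hg).
      rewrite !upd2_ne in HT by lia. rewrite upd1_eq in HT.
      rewrite !upd1_ne in Hpi by lia. rewrite upd2_ne in Hpi by lia.
      exists pi. split; auto.
    - intros [pi [Hpi Ht]]. exists (graph pi). split.
      + apply so_path_sem. exists pi. rewrite !upd1_ne by lia. rewrite upd2_ne by lia. split; auto.
        intros n w. rewrite upd2_eq. simpl. reflexivity.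
      + rewrite (so_trace_eq_sem _ _ pi) by (intros n w; rewrite upd2_eq; simpl; reflexivity).
        rewrite !upd2_ne by lia. rewrite upd1_eq. exact Ht. }
  unfold upd1 at 1. simpl. split.
  - intros H i Hi. destruct (H i) as [H1|[H1 H2]]; [contradiction|]. split; [apply HP; auto|apply HC; auto].
  - intros H i. destruct (classic (e2 0 1 [i])) as [Hi|Hi]; [right|left; auto].
    destruct (H i Hi). split; [apply HP; auto|apply HC; auto].
Qed.

Lemma so_kripke_in_team_sem : forall CF C, defines_class CF C -> forall e1 e2,
  sholds e1 e2 (so_kripke_in_team CF) <->
  forall pi, is_path (e1 6) (e1 7) (fun a b => e2 1 2 [a; b]) pi -> C (path_trace (fun a b => e2 2 2 [a; b]) pi) ->
    exists i, e2 0 1 [i] /\ coded_trace (e2 0 3) i = path_trace (fun a b => e2 2 2 [a; b]) pi.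
Proof.
  intros CF C Hok e1 e2. unfold so_kripke_in_team, sImp, memX. cbn [sholds map teval].
  assert (HG : forall X pi, (forall n w, X [n; w] <-> pi n = w) ->
     (sholds e1 (upd2 e2 3 2 X) (CF acc_path) <-> C (path_trace (fun a b => e2 2 2 [a; b]) pi)) /\
     ((exists v, sholds (upd1 e1 1 v) (upd2 e2 3 2 X) (SAnd (SMem 0 1 [TVar 1]) so_trace_eq)) <->
      exists i, e2 0 1 [i] /\ coded_trace (e2 0 3) i = path_trace (fun a b => e2 2 2 [a; b]) pi)).
  { intros X pi Hg. split.
    - rewrite (Hok acc_path _ _ _ (acc_path_denotes e1 (upd2 e2 3 2 X))). rewrite upd2_eq, upd2_ne by lia.
      assert (E : rel_trace (fun n p => exists w, X [n; w] /\ e2 2 2 [w; p]) = path_trace (fun a b => e2 2 2 [a; b]) pi).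
      { unfold rel_trace, path_trace. extensionality n; extensionality p. apply pb_ext. split.
        - intros [w [Hw He]]. apply Hg in Hw. subst; auto.
        - intros He. exists (pi n). split; auto. apply Hg; auto. }
      rewrite E. reflexivity.
    - cbn [sholds map teval]. split.
      + intros [v [Hv HT]]. rewrite (so_trace_eq_sem _ _ pi) in HT by (rewrite upd2_eq; exact Hg).
        rewrite !upd2_ne in HT by lia. rewrite upd1_eq in HT. rewrite upd2_ne in Hv by lia.
        rewrite upd1_eq in Hv. exists v. split; auto.
      + intros [i [Hi Ht]]. exists i. rewrite upd2_ne by lia. rewrite upd1_eq. split; auto.
        rewrite (so_trace_eq_sem _ _ pi) by (rewrite upd2_eq; exact Hg).
        rewrite !upd2_ne by lia. rewrite upd1_eq. exact Ht. }
  split.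
  - intros H pi Hpi Hc. destruct (H (graph pi)) as [H1|[H1|H1]].
    + exfalso. apply H1. apply so_path_sem. exists pi. rewrite upd2_ne by lia. split; auto.
      intros n w. rewrite upd2_eq. simpl. reflexivity.
    + exfalso. apply H1. apply (HG (graph pi) pi); auto. intros n w; simpl; reflexivity.
    + apply (HG (graph pi) pi); auto. intros n w; simpl; reflexivity.
  - intros H X. destruct (classic (sholds e1 (upd2 e2 3 2 X) so_path)) as [HP|HP]; [right|left; auto].
    pose proof HP as HP'. apply so_path_sem in HP'. destruct HP' as [pi [Hpi Hg]].
    rewrite upd2_eq in Hg. rewrite upd2_ne in Hpi by lia.
    destruct (HG X pi Hg) as [HG1 HG2].
    destruct (classic (C (path_trace (fun a b => e2 2 2 [a; b]) pi))) as [Hc|Hc]; [right|left; rewrite HG1; auto].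
    apply HG2. apply H; auto.
Qed.

Definition e10 : nat -> nat := fun _ => 0.
Definition e20 : nat -> nat -> list nat -> Prop := fun _ _ _ => False.

Definition at_time0 (h : sform) : sform := SEx1 0 (SAnd (SEq (TVar 0) TZero) h).
Definition sent_count (h : sform) : sform := SEx2 0 3 (SEx2 0 1 (at_time0 h)).
Definition so_team_in_class (CF : (term -> term -> sform) -> sform) : sform :=
  SAll1 1 (sImp (memX 1) (CF acc_coded)).
Definition sent_restr (CF : (term -> term -> sform) -> sform) (h : sform) : sform :=
  SEx2 0 3 (SEx2 0 1 (SAnd (so_team_in_class CF) (at_time0 h))).
Definition sent_kripke (CF : (term -> term -> sform) -> sform) (h : sform) : sform :=
  SEx2 0 3 (SEx2 0 1 (SEx1 6 (SEx1 7 (SEx2 1 2 (SEx2 2 2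
    (SAnd so_wf_frame (SAnd (so_team_in_kripke CF) (SAnd (so_kripke_in_team CF) (at_time0 h))))))))).

Lemma at_time0_sem : forall e1 e2 phi, sholds e1 e2 (at_time0 (ltl2so phi)) <-> tsat phi (coded_team (e2 0 3) (e2 0 1) 0).
Proof.
  intros e1 e2 phi. unfold at_time0. cbn [sholds teval]. split.
  - intros [v [Hv Hs]]. rewrite upd1_eq in Hv. subst v. rewrite ltl2so_correct in Hs. rewrite upd1_eq in Hs. exact Hs.
  - intros Hs. exists 0. rewrite upd1_eq. split; auto. rewrite ltl2so_correct, upd1_eq. exact Hs.
Qed.

Lemma sent_count_sem : forall phi, sholds e10 e20 (sent_count (ltl2so phi)) <-> CountSat phi.
Proof.
  intros phi. rewrite countsat_coded. unfold sent_count. cbn [sholds]. setoid_rewrite at_time0_sem.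
  unfold upd2; simpl. tauto.
Qed.

Lemma so_team_in_class_sem : forall CF C, defines_class CF C -> forall e1 e2,
  sholds e1 e2 (so_team_in_class CF) <-> forall i, e2 0 1 [i] -> C (coded_trace (e2 0 3) i).
Proof.
  intros CF C Hok e1 e2. unfold so_team_in_class, sImp, memX. cbn [sholds map teval].
  assert (HC : forall i, sholds (upd1 e1 1 i) e2 (CF acc_coded) <-> C (coded_trace (e2 0 3) i)).
  { intros i. rewrite (Hok acc_coded _ e2 _ (acc_coded_denotes (upd1 e1 1 i) e2)). rewrite upd1_eq. reflexivity. }
  split.
  - intros H i Hi. destruct (H i) as [H1|H1]; [rewrite upd1_eq in H1; contradiction|]. apply HC; auto.
  - intros H i. rewrite upd1_eq. destruct (classic (e2 0 1 [i])) as [Hi|Hi]; [right|left; auto].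
    apply HC; auto.
Qed.

Lemma sent_restr_sem : forall CF C, defines_class CF C -> trace_class C -> forall phi,
  sholds e10 e20 (sent_restr CF (ltl2so phi)) <-> CSat C phi.
Proof.
  intros CF C Hok HC phi. rewrite csat_coded by auto. unfold sent_restr. cbn [sholds].
  setoid_rewrite at_time0_sem. setoid_rewrite (so_team_in_class_sem CF C Hok).
  unfold upd2; simpl. tauto.
Qed.

Lemma sent_kripke_sem : forall CF C, defines_class CF C -> trace_class C -> forall phi,
  sholds e10 e20 (sent_kripke CF (ltl2so phi)) <-> CFinSat C phi.
Proof.
  intros CF C Hok HC phi. rewrite cfinsat_coded by auto. unfold sent_kripke. cbn [sholds].
  setoid_rewrite at_time0_sem. setoid_rewrite (so_team_in_kripke_sem CF C Hok).
  setoid_rewrite (so_kripke_in_team_sem CF C Hok).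
  setoid_rewrite so_wf_frame_sem. unfold upd2, upd1; simpl. unfold kripke_coded. split.
  - intros [R [X [W [root [Rel [Eta [H1 [H2 [H3 H4]]]]]]]]].
    exists R, X, W, root, (fun a b => Rel [a; b]), (fun a b => Eta [a; b]). tauto.
  - intros [R [X [W [root [Rel [Eta [[H1 [H2 H3]] H4]]]]]]].
    exists R, X, W, root, (fun l => match l with [a; b] => Rel a b | _ => False end),
      (fun l => match l with [a; b] => Eta a b | _ => False end). tauto.
Qed.

(* Closedness: the free variables of [ltl2so phi] are the first-order 0 and
   the second-order (0,1), (0,3), all bound by the sentences. *)
Ltac in_list := simpl; repeat (first [left; reflexivity | right]); try assumption.

Lemma numpos_closed : forall B p, term_closed B (numpos p).
Proof. intros B p; induction p; simpl; tauto. Qed.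

Lemma num_closed : forall B n, term_closed B (num n).
Proof. intros B [|n]; simpl; [exact I|]. apply numpos_closed. Qed.

Ltac closed_tac := repeat (cbn [sclosed term_closed length]; match goal with
  | |- _ /\ _ => split
  | |- Forall _ [] => constructor
  | |- Forall _ (_ :: _) => constructor
  | |- True => exact I
  | |- ?x = ?x => reflexivity
  | |- In _ _ => solve [in_list]
  | |- _ \/ _ => solve [in_list]
  | |- term_closed _ (num _) => apply num_closed
  end).

Lemma ltl2so_closed : forall phi B1 B2, In 0 B1 -> In (0, 1) B2 -> In (0, 3) B2 ->
  sclosed B1 B2 (ltl2so phi).
Proof.
  induction phi; intros B1 B2 H0 H1 H3; simpl;
  unfold so_atom, so_neg, so_or, so_next, so_future, so_glob, so_until, so_release,
    setk, shifted_by_2, shifted_by_4, fSingle, fUnion, fEqXY, fEqXZ, memX, memY, memZ, siff;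
  closed_tac;
  try (apply IHphi; solve [in_list]); try (apply IHphi1; solve [in_list]);
  try (apply IHphi2; solve [in_list]).
Qed.

Lemma sentences_closed : forall phi, sclosed [] [] (sent_count (ltl2so phi)) /\
  forall CF, CF = so_periodic \/ CF = so_constant ->
    sclosed [] [] (sent_restr CF (ltl2so phi)) /\ sclosed [] [] (sent_kripke CF (ltl2so phi)).
Proof.
  intros phi.
  unfold sent_count, sent_restr, sent_kripke, at_time0, so_team_in_class, so_team_in_kripke,
    so_kripke_in_team, acc_coded, acc_path, so_wf_frame, so_path, so_trace_eq,
    lt_, fRel, fEta, fPi, sImp, memX, siff.
  split; [|intros CF [-> | ->]; unfold so_periodic, so_constant, siff, sImp];
  closed_tac; apply ltl2so_closed; in_list.
Qed.

(** * Unique decodability of the encoding of second-order formulas *)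

(* Decoders with fuel [n]: they return the decoded object and the rest of
   the input.  An encoding followed by anything decodes to itself, and a
   successful decoding is stable under more fuel; hence every word parses
   in at most one way ([parses_enc]). *)
Fixpoint dec_pos (s : list bool) : option (positive * list bool) :=
  match s with
  | false :: false :: r => Some (xH, r)
  | true :: b :: r => match dec_pos r with
                      | Some (p, r') => Some ((if b then xI p else xO p), r')
                      | None => None end
  | _ => None
  end.

Definition dec_nat (s : list bool) : option (nat * list bool) :=
  match s with
  | false :: true :: r => Some (0, r)
  | _ => match dec_pos s with Some (p, r) => Some (Pos.to_nat p, r) | None => None end
  end.

Lemma dec_pos_enc : forall p r, dec_pos (enc_pos p ++ [false; false] ++ r) = Some (p, r).
Proof. induction p; intros; simpl; try (specialize (IHp r); simpl in IHp; rewrite IHp); reflexivity. Qed.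

Lemma dec_nat_pos : forall p r, dec_nat (enc_pos p ++ [false; false] ++ r) = Some (Pos.to_nat p, r).
Proof.
  intros p r. assert (H := dec_pos_enc p r). unfold dec_nat.
  destruct p; simpl in *; try rewrite H; reflexivity.
Qed.

Lemma dec_nat_enc : forall n r, dec_nat (enc_nat n ++ r) = Some (n, r).
Proof.
  intros [|n] r; [reflexivity|].
  unfold enc_nat. rewrite <- app_assoc, dec_nat_pos, Nat2Pos.id by lia. reflexivity.
Qed.

Fixpoint dec_term (n : nat) (s : list bool) : option (term * list bool) :=
  match n with 0 => None | S n' =>
  match s with
  | b0 :: b1 :: b2 :: b3 :: r =>
    match b0, b1, b2, b3 with
    | false, false, false, false =>
        match dec_nat r with Some (i, r') => Some (TVar i, r') | None => None end
    | true, false, false, false => Some (TZero, r)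
    | false, true, false, false => Some (TOne, r)
    | true, true, false, false =>
        match dec_term n' r with
        | Some (a, r1) => match dec_term n' r1 with
                          | Some (b, r2) => Some (TAdd a b, r2) | None => None end
        | None => None end
    | false, false, true, false =>
        match dec_term n' r with
        | Some (a, r1) => match dec_term n' r1 with
                          | Some (b, r2) => Some (TMul a b, r2) | None => None end
        | None => None end
    | _, _, _, _ => None
    end
  | _ => None
  end end.

Fixpoint dec_terms (n k : nat) (s : list bool) : option (list term * list bool) :=
  match k with
  | 0 => Some ([], s)
  | S k' => match dec_term n s with
            | Some (t, r) => match dec_terms n k' r with
                             | Some (ts, r') => Some (t :: ts, r') | None => None end
            | None => None end
  end.

Fixpoint dec_form (n : nat) (s : list bool) : option (sform * list bool) :=
  match n with 0 => None | S n' =>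
  match s with
  | b0 :: b1 :: b2 :: b3 :: r =>
    match b0, b1, b2, b3 with
    | false, false, false, false =>
        match dec_term n' r with
        | Some (a, r1) => match dec_term n' r1 with
                          | Some (b, r2) => Some (SEq a b, r2) | None => None end
        | None => None end
    | true, false, false, false =>
        match dec_term n' r with
        | Some (a, r1) => match dec_term n' r1 with
                          | Some (b, r2) => Some (SLe a b, r2) | None => None end
        | None => None end
    | false, true, false, false =>
        match dec_nat r with
        | Some (j, r1) => match dec_nat r1 with
          | Some (m, r2) => match dec_nat r2 with
            | Some (l, r3) => match dec_terms n' l r3 with
              | Some (ts, r4) => Some (SMem j m ts, r4)
              | None => None end
            | None => None end
          | None => None end
        | None => None end
    | true, true, false, false =>
        match dec_form n' r with Some (a, r1) => Some (SNeg a, r1) | None => None end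
    | false, false, true, false =>
        match dec_form n' r with
        | Some (a, r1) => match dec_form n' r1 with
                          | Some (b, r2) => Some (SAnd a b, r2) | None => None end
        | None => None end
    | true, false, true, false =>
        match dec_form n' r with
        | Some (a, r1) => match dec_form n' r1 with
                          | Some (b, r2) => Some (SOr a b, r2) | None => None end
        | None => None end
    | false, true, true, false =>
        match dec_nat r with
        | Some (i, r1) => match dec_form n' r1 with Some (a, r2) => Some (SEx1 i a, r2) | None => None end
        | None => None end
    | true, true, true, false =>
        match dec_nat r with
        | Some (i, r1) => match dec_form n' r1 with Some (a, r2) => Some (SAll1 i a, r2) | None => None end
        | None => None end
    | false, false, false, true =>
        match dec_nat r with
        | Some (j, r1) => match dec_nat r1 with
          | Some (m, r2) => match dec_form n' r2 with Some (a, r3) => Some (SEx2 j m a, r3) | None => None end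
          | None => None end
        | None => None end
    | true, false, false, true =>
        match dec_nat r with
        | Some (j, r1) => match dec_nat r1 with
          | Some (m, r2) => match dec_form n' r2 with Some (a, r3) => Some (SAll2 j m a, r3) | None => None end
          | None => None end
        | None => None end
    | _, _, _, _ => None
    end
  | _ => None
  end end.

Fixpoint tsize (t : term) : nat :=
  match t with
  | TAdd a b | TMul a b => S (tsize a + tsize b)
  | _ => 1 end.

Lemma dec_term_mono : forall n t s r, dec_term n s = Some (t, r) -> dec_term (S n) s = Some (t, r).
Proof.
  induction n; intros t s r H; [discriminate|].
  destruct s as [|b0 [|b1 [|b2 [|b3 s]]]]; try discriminate.
  cbn [dec_term] in H. remember (S n) as m eqn:Em. cbn [dec_term]. subst m.
  destruct b0, b1, b2, b3; try exact H;
  (destruct (dec_term n s) as [[a r1]|] eqn:E1; [|discriminate];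
   destruct (dec_term n r1) as [[b r2]|] eqn:E2; [|discriminate];
   rewrite (IHn _ _ _ E1), (IHn _ _ _ E2); exact H).
Qed.

Lemma dec_term_mono_le : forall n m t s r, n <= m -> dec_term n s = Some (t, r) -> dec_term m s = Some (t, r).
Proof. intros n m t s r Hle; induction Hle; auto using dec_term_mono. Qed.

Lemma dec_terms_mono : forall n k ts s r, dec_terms n k s = Some (ts, r) -> dec_terms (S n) k s = Some (ts, r).
Proof.
  intros n k; induction k; intros ts s r H; cbn [dec_terms] in *; auto.
  destruct (dec_term n s) as [[a r1]|] eqn:E1; [|discriminate].
  rewrite (dec_term_mono _ _ _ _ E1).
  destruct (dec_terms n k r1) as [[b r2]|] eqn:E2; [|discriminate].
  rewrite (IHk _ _ _ E2). exact H.
Qed.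

Lemma dec_form_mono : forall n F s r, dec_form n s = Some (F, r) -> dec_form (S n) s = Some (F, r).
Proof.
  induction n; intros F s r H; [discriminate|].
  destruct s as [|b0 [|b1 [|b2 [|b3 s]]]]; try discriminate.
  cbn [dec_form] in H. remember (S n) as m eqn:Em. cbn [dec_form]. subst m.
  destruct b0, b1, b2, b3; try exact H.
  all: repeat match goal with
  | H : context [match dec_term ?nn ?x with _ => _ end] |- _ =>
      let E := fresh in destruct (dec_term nn x) as [[? ?]|] eqn:E; [|discriminate];
      rewrite (dec_term_mono _ _ _ _ E)
  | H : context [match dec_form ?nn ?x with _ => _ end] |- _ =>
      let E := fresh in destruct (dec_form nn x) as [[? ?]|] eqn:E; [|discriminate];
      rewrite (IHn _ _ _ E)
  | H : context [match dec_terms ?nn ?l ?x with _ => _ end] |- _ =>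
      let E := fresh in destruct (dec_terms nn l x) as [[? ?]|] eqn:E; [|discriminate];
      rewrite (dec_terms_mono _ _ _ _ _ E)
  | H : context [match dec_nat ?x with _ => _ end] |- _ =>
      let E := fresh in destruct (dec_nat x) as [[? ?]|] eqn:E; [|discriminate]
  end; exact H.
Qed.

Lemma dec_form_mono_le : forall n m F s r, n <= m -> dec_form n s = Some (F, r) -> dec_form m s = Some (F, r).
Proof. intros n m F s r Hle; induction Hle; auto using dec_form_mono. Qed.

Lemma dec_term_enc : forall t n r, tsize t <= n -> dec_term n (enc_term t ++ r) = Some (t, r).
Proof.
  induction t; intros m r Hn; destruct m as [|m]; simpl in Hn; try lia; simpl.
  - rewrite dec_nat_enc. reflexivity.
  - reflexivity.
  - reflexivity.
  - rewrite <- app_assoc, IHt1 by lia. rewrite IHt2 by lia. reflexivity.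
  - rewrite <- app_assoc, IHt1 by lia. rewrite IHt2 by lia. reflexivity.
Qed.

Lemma dec_terms_enc : forall ts n r, (forall t, In t ts -> tsize t <= n) ->
  dec_terms n (length ts) (flat_map enc_term ts ++ r) = Some (ts, r).
Proof.
  induction ts; intros n r H; simpl; auto.
  rewrite <- app_assoc, dec_term_enc by (apply H; simpl; auto).
  rewrite IHts by (intros; apply H; simpl; auto). reflexivity.
Qed.

Fixpoint fsize (f : sform) : nat :=
  match f with
  | SEq a b | SLe a b => S (tsize a + tsize b)
  | SMem _ _ ts => S (fold_right (fun t acc => tsize t + acc) 0 ts)
  | SNeg g | SEx1 _ g | SAll1 _ g | SEx2 _ _ g | SAll2 _ _ g => S (fsize g)
  | SAnd g h | SOr g h => S (fsize g + fsize h)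
  end.

Lemma fold_size_le : forall ts t, In t ts -> tsize t <= fold_right (fun t acc => tsize t + acc) 0 ts.
Proof. induction ts; simpl; intros t H; [contradiction|]. destruct H; subst; [lia|]. specialize (IHts _ H); lia. Qed.

Lemma dec_form_enc : forall F n r, fsize F <= n -> dec_form n (enc_sform F ++ r) = Some (F, r).
Proof.
  induction F; intros m r Hn; destruct m as [|m]; simpl in Hn; try lia; simpl;
  repeat rewrite <- app_assoc.
  - rewrite dec_term_enc by lia. rewrite dec_term_enc by lia. reflexivity.
  - rewrite dec_term_enc by lia. rewrite dec_term_enc by lia. reflexivity.
  - rewrite !dec_nat_enc. rewrite dec_terms_enc. reflexivity.
    intros t Ht. pose proof (fold_size_le _ _ Ht). lia.
  - rewrite IHF by lia. reflexivity.
  - rewrite IHF1 by lia. rewrite IHF2 by lia. reflexivity.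
  - rewrite IHF1 by lia. rewrite IHF2 by lia. reflexivity.
  - rewrite dec_nat_enc, IHF by lia. reflexivity.
  - rewrite dec_nat_enc, IHF by lia. reflexivity.
  - rewrite !dec_nat_enc, IHF by lia. reflexivity.
  - rewrite !dec_nat_enc, IHF by lia. reflexivity.
Qed.

Definition parses (s : list bool) (F : sform) (r : list bool) : Prop :=
  exists N, dec_form N s = Some (F, r).
Definition parses_term (s : list bool) (t : term) (r : list bool) : Prop :=
  exists N, dec_term N s = Some (t, r).
Definition parses_terms (k : nat) (s : list bool) (ts : list term) (r : list bool) : Prop :=
  exists N, dec_terms N k s = Some (ts, r).

Lemma parses_enc : forall G s F r, parses (enc_sform G ++ s) F r -> F = G /\ r = s.
Proof.
  intros G s F r [N H].
  assert (H1 := dec_form_mono_le N (N + fsize G) _ _ _ ltac:(lia) H).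
  rewrite dec_form_enc in H1 by lia. injection H1; auto.
Qed.

Lemma parses_term_enc : forall G s F r, parses_term (enc_term G ++ s) F r -> F = G /\ r = s.
Proof.
  intros G s F r [N H].
  assert (H1 := dec_term_mono_le N (N + tsize G) _ _ _ ltac:(lia) H).
  rewrite dec_term_enc in H1 by lia. injection H1; auto.
Qed.

Ltac head_inversion bits :=
  let N := fresh "N" in let H := fresh "H" in
  intros [N H]; destruct N as [|N]; [discriminate|];
  match type of H with dec_form _ (?t ++ ?x) = _ => change (t ++ x) with (bits ++ x) in H
                     | dec_term _ (?t ++ ?x) = _ => change (t ++ x) with (bits ++ x) in H end;
  cbn [dec_form dec_term app] in H; repeat (rewrite dec_nat_enc in H; cbv beta iota in H).

Lemma inv_ex2 : forall j m s F r, parses (tag 8 ++ enc_nat j ++ enc_nat m ++ s) F r ->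
  exists a, parses s a r /\ F = SEx2 j m a.
Proof.
  intros j m s F r. head_inversion [false;false;false;true].
  destruct (dec_form N s) as [[a r1]|] eqn:E; [|discriminate]. injection H; intros; subst.
  exists a; split; [exists N|]; auto.
Qed.

Lemma inv_ex1 : forall j s F r, parses (tag 6 ++ enc_nat j ++ s) F r ->
  exists a, parses s a r /\ F = SEx1 j a.
Proof.
  intros j s F r. head_inversion [false;true;true;false].
  destruct (dec_form N s) as [[a r1]|] eqn:E; [|discriminate]. injection H; intros; subst.
  exists a; split; [exists N|]; auto.
Qed.

Lemma inv_all1 : forall j s F r, parses (tag 7 ++ enc_nat j ++ s) F r ->
  exists a, parses s a r /\ F = SAll1 j a.
Proof.
  intros j s F r. head_inversion [true;true;true;false].
  destruct (dec_form N s) as [[a r1]|] eqn:E; [|discriminate]. injection H; intros; subst.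
  exists a; split; [exists N|]; auto.
Qed.

Lemma inv_neg : forall s F r, parses (tag 3 ++ s) F r -> exists a, parses s a r /\ F = SNeg a.
Proof.
  intros s F r. head_inversion [true;true;false;false].
  destruct (dec_form N s) as [[a r1]|] eqn:E; [|discriminate]. injection H; intros; subst.
  exists a; split; [exists N|]; auto.
Qed.

Lemma inv_and : forall s F r, parses (tag 4 ++ s) F r ->
  exists a b r1, parses s a r1 /\ parses r1 b r /\ F = SAnd a b.
Proof.
  intros s F r. head_inversion [false;false;true;false].
  destruct (dec_form N s) as [[a r1]|] eqn:E; [|discriminate].
  destruct (dec_form N r1) as [[b r2]|] eqn:E2; [|discriminate]. injection H; intros; subst.
  exists a, b, r1; repeat split; [exists N|exists N]; auto.
Qed.

Lemma inv_or : forall s F r, parses (tag 5 ++ s) F r ->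
  exists a b r1, parses s a r1 /\ parses r1 b r /\ F = SOr a b.
Proof.
  intros s F r. head_inversion [true;false;true;false].
  destruct (dec_form N s) as [[a r1]|] eqn:E; [|discriminate].
  destruct (dec_form N r1) as [[b r2]|] eqn:E2; [|discriminate]. injection H; intros; subst.
  exists a, b, r1; repeat split; [exists N|exists N]; auto.
Qed.

Lemma inv_mem : forall j m l s F r, parses (tag 2 ++ enc_nat j ++ enc_nat m ++ enc_nat l ++ s) F r ->
  exists ts, parses_terms l s ts r /\ F = SMem j m ts.
Proof.
  intros j m l s F r. head_inversion [false;true;false;false].
  destruct (dec_terms N l s) as [[a r1]|] eqn:E; [|discriminate]. injection H; intros; subst.
  exists a; split; [exists N|]; auto.
Qed.

Lemma inv_tadd : forall s t r, parses_term (tag 3 ++ s) t r ->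
  exists a b r1, parses_term s a r1 /\ parses_term r1 b r /\ t = TAdd a b.
Proof.
  intros s F r. head_inversion [true;true;false;false].
  destruct (dec_term N s) as [[a r1]|] eqn:E; [|discriminate].
  destruct (dec_term N r1) as [[b r2]|] eqn:E2; [|discriminate]. injection H; intros; subst.
  exists a, b, r1; repeat split; [exists N|exists N]; auto.
Qed.

Lemma inv_tmul : forall s t r, parses_term (tag 4 ++ s) t r ->
  exists a b r1, parses_term s a r1 /\ parses_term r1 b r /\ t = TMul a b.
Proof.
  intros s F r. head_inversion [false;false;true;false].
  destruct (dec_term N s) as [[a r1]|] eqn:E; [|discriminate].
  destruct (dec_term N r1) as [[b r2]|] eqn:E2; [|discriminate]. injection H; intros; subst.
  exists a, b, r1; repeat split; [exists N|exists N]; auto.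
Qed.

Lemma inv_terms_S : forall k s ts r, parses_terms (S k) s ts r ->
  exists t ts' r1, parses_term s t r1 /\ parses_terms k r1 ts' r /\ ts = t :: ts'.
Proof.
  intros k s ts r [N H]. cbn [dec_terms] in H.
  destruct (dec_term N s) as [[a r1]|] eqn:E; [|discriminate].
  destruct (dec_terms N k r1) as [[b r2]|] eqn:E2; [|discriminate]. injection H; intros; subst.
  exists a, b, r1; repeat split; [exists N|exists N]; auto.
Qed.

Lemma inv_terms_0 : forall s ts r, parses_terms 0 s ts r -> ts = [] /\ r = s.
Proof. intros s ts r [N H]. simpl in H. injection H; auto. Qed.

(* No encoding starts with the unused tag 15. *)
Definition poison : list bool := [true; true; true; true].

Lemma poison_not_parses : forall s F r, ~ parses (poison ++ s) F r.
Proof. intros s F r [N H]. destruct N; discriminate. Qed.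
Lemma poison_not_parses_term : forall s F r, ~ parses_term (poison ++ s) F r.
Proof. intros s F r [N H]. destruct N; discriminate. Qed.

Fixpoint dec_forms (N n : nat) (s : list bool) : option (list sform * list bool) :=
  match n with
  | 0 => Some ([], s)
  | S n' => match dec_form N s with
            | Some (F, r) => match dec_forms N n' r with
                             | Some (Fs, r') => Some (F :: Fs, r') | None => None end
            | None => None end
  end.
Definition parses_seq (n : nat) (s : list bool) (Fs : list sform) (r : list bool) : Prop :=
  exists N, dec_forms N n s = Some (Fs, r).

Lemma dec_forms_mono : forall n N M s Fs r, N <= M -> dec_forms N n s = Some (Fs, r) ->
  dec_forms M n s = Some (Fs, r).
Proof.
  induction n; intros N M s Fs r Hle H; simpl in *; auto.
  destruct (dec_form N s) as [[a r1]|] eqn:E; [|discriminate].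
  rewrite (dec_form_mono_le _ _ _ _ _ Hle E).
  destruct (dec_forms N n r1) as [[b r2]|] eqn:E2; [|discriminate].
  rewrite (IHn _ _ _ _ _ Hle E2). exact H.
Qed.

Lemma parses_seq_nil_inv : forall s Fs r, parses_seq 0 s Fs r -> Fs = [] /\ r = s.
Proof. intros s Fs r [N H]. simpl in H. injection H; auto. Qed.

Lemma parses_seq_cons_inv : forall n s Fs r, parses_seq (S n) s Fs r ->
  exists F Fs' r1, parses s F r1 /\ parses_seq n r1 Fs' r /\ Fs = F :: Fs'.
Proof.
  intros n s Fs r [N H]. simpl in H.
  destruct (dec_form N s) as [[a r1]|] eqn:E; [|discriminate].
  destruct (dec_forms N n r1) as [[b r2]|] eqn:E2; [|discriminate]. injection H; intros; subst.
  exists a, b, r1; repeat split; [exists N|exists N]; auto.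
Qed.

Lemma parses_seq_cons : forall n s F r1 Fs r, parses s F r1 -> parses_seq n r1 Fs r -> parses_seq (S n) s (F :: Fs) r.
Proof.
  intros n s F r1 Fs r [N1 H1] [N2 H2]. exists (N1 + N2). simpl.
  rewrite (dec_form_mono_le N1 (N1 + N2) _ _ _ ltac:(lia) H1).
  rewrite (dec_forms_mono _ N2 (N1 + N2) _ _ _ ltac:(lia) H2). reflexivity.
Qed.

Lemma nil_not_parses : forall F r, ~ parses [] F r.
Proof. intros F r [N H]. destruct N; discriminate. Qed.

Ltac dstep :=
  match goal with
  | H : parses (tag 8 ++ enc_nat _ ++ enc_nat _ ++ _) _ _ |- _ =>
      apply inv_ex2 in H; destruct H as [? [H ?]]; subst
  | H : parses (tag 6 ++ enc_nat _ ++ _) _ _ |- _ =>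
      apply inv_ex1 in H; destruct H as [? [H ?]]; subst
  | H : parses (tag 7 ++ enc_nat _ ++ _) _ _ |- _ =>
      apply inv_all1 in H; destruct H as [? [H ?]]; subst
  | H : parses (tag 3 ++ _) _ _ |- _ =>
      apply inv_neg in H; destruct H as [? [H ?]]; subst
  | H : parses (tag 4 ++ _) _ _ |- _ =>
      let H1 := fresh "H" in apply inv_and in H; destruct H as [? [? [? [H [H1 ?]]]]]; subst
  | H : parses (tag 5 ++ _) _ _ |- _ =>
      let H1 := fresh "H" in apply inv_or in H; destruct H as [? [? [? [H [H1 ?]]]]]; subst
  | H : parses (tag 2 ++ enc_nat _ ++ enc_nat _ ++ enc_nat _ ++ _) _ _ |- _ =>
      apply inv_mem in H; destruct H as [? [H ?]]; subst
  | H : parses (enc_sform _ ++ _) _ _ |- _ =>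
      apply parses_enc in H; destruct H; subst
  | H : parses_terms (S _) _ _ _ |- _ =>
      let H1 := fresh "H" in apply inv_terms_S in H; destruct H as [? [? [? [H [H1 ?]]]]]; subst
  | H : parses_terms 0 _ _ _ |- _ => apply inv_terms_0 in H; destruct H; subst
  | H : parses_term (enc_term _ ++ _) _ _ |- _ => apply parses_term_enc in H; destruct H; subst
  | H : parses_term (tag 3 ++ _) _ _ |- _ =>
      let H1 := fresh "H" in apply inv_tadd in H; destruct H as [? [? [? [H [H1 ?]]]]]; subst
  | H : parses_term (tag 4 ++ _) _ _ |- _ =>
      let H1 := fresh "H" in apply inv_tmul in H; destruct H as [? [? [? [H [H1 ?]]]]]; subst
  end.

(** * The translation as a streaming rewriting of encodings *)

(* The encoding of each image [so_c a b] is a fixed prefix [frag_c] followed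
   by the encodings of [a] and [b]. *)
Definition setk_frag (t : term) : list bool :=
  tag 6 ++ enc_nat 3 ++ tag 4 ++ enc_sform (SEq (TVar 3) (TVar 0)) ++ tag 6 ++ enc_nat 0 ++ tag 4
  ++ enc_sform (SEq (TVar 0) t).
Definition frag_atom : list bool :=
  tag 7 ++ enc_nat 1 ++ tag 5 ++ enc_sform (SNeg (memX 1)) ++ tag 2 ++ enc_nat 0
  ++ enc_nat 3 ++ enc_nat 3 ++ enc_term (TVar 1) ++ enc_term (TVar 0).
Definition frag_neg : list bool :=
  tag 7 ++ enc_nat 1 ++ tag 5 ++ enc_sform (SNeg (memX 1)) ++ tag 3 ++ tag 8
  ++ enc_nat 0 ++ enc_nat 1 ++ tag 4 ++ enc_sform fSingle.
Definition frag_and : list bool := tag 4.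
Definition frag_or : list bool :=
  tag 8 ++ enc_nat 1 ++ enc_nat 1 ++ tag 8 ++ enc_nat 2 ++ enc_nat 1 ++ tag 4
  ++ enc_sform fUnion ++ tag 8 ++ enc_nat 0 ++ enc_nat 1 ++ tag 4 ++ enc_sform fEqXZ ++ tag 4
  ++ tag 8 ++ enc_nat 0 ++ enc_nat 1 ++ tag 4 ++ enc_sform fEqXY.
Definition frag_next : list bool := setk_frag (TAdd (TVar 3) TOne).
Definition frag_future : list bool := tag 6 ++ enc_nat 2 ++ setk_frag shifted_by_2.
Definition frag_glob : list bool := tag 7 ++ enc_nat 2 ++ setk_frag shifted_by_2.
Definition frag_until : list bool :=
  tag 6 ++ enc_nat 2 ++ setk_frag shifted_by_2 ++ tag 4 ++ tag 7
  ++ enc_nat 4 ++ tag 5 ++ enc_sform (SNeg (SLe (TAdd (TVar 4) TOne) (TVar 2))) ++ tag 6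
  ++ enc_nat 0 ++ tag 4 ++ enc_sform (SEq (TVar 0) shifted_by_4).
Definition frag_release : list bool :=
  tag 7 ++ enc_nat 2 ++ setk_frag shifted_by_2 ++ tag 5 ++ tag 6
  ++ enc_nat 4 ++ tag 4 ++ enc_sform (SLe (TAdd (TVar 4) TOne) (TVar 2)) ++ tag 6
  ++ enc_nat 0 ++ tag 4 ++ enc_sform (SEq (TVar 0) shifted_by_4).
Definition frag_tilde : list bool := tag 3.

Ltac encsolve := simpl; repeat (rewrite <- ?app_assoc; simpl); reflexivity.

Lemma enc_so_atom t : enc_sform (so_atom t) = frag_atom ++ enc_term t.
Proof. unfold frag_atom; simpl. rewrite app_nil_r. encsolve. Qed.
Lemma enc_so_neg a : enc_sform (so_neg a) = frag_neg ++ enc_sform a.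
Proof. unfold frag_neg; encsolve. Qed.
Lemma enc_so_and a b : enc_sform (SAnd a b) = frag_and ++ enc_sform a ++ enc_sform b.
Proof. unfold frag_and; encsolve. Qed.
Lemma enc_so_or a b : enc_sform (so_or a b) = frag_or ++ enc_sform a ++ enc_sform b.
Proof. unfold frag_or; encsolve. Qed.
Lemma enc_so_next a : enc_sform (so_next a) = frag_next ++ enc_sform a.
Proof. unfold frag_next, setk_frag; encsolve. Qed.
Lemma enc_so_future a : enc_sform (so_future a) = frag_future ++ enc_sform a.
Proof. unfold frag_future, setk_frag; encsolve. Qed.
Lemma enc_so_glob a : enc_sform (so_glob a) = frag_glob ++ enc_sform a.
Proof. unfold frag_glob, setk_frag; encsolve. Qed.
Lemma enc_so_until a b : enc_sform (so_until a b) = frag_until ++ enc_sform a ++ enc_sform b.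
Proof. unfold frag_until, setk_frag; encsolve. Qed.
Lemma enc_so_release a b : enc_sform (so_release a b) = frag_release ++ enc_sform a ++ enc_sform b.
Proof. unfold frag_release, setk_frag; encsolve. Qed.
Lemma enc_so_tilde a : enc_sform (SNeg a) = frag_tilde ++ enc_sform a.
Proof. unfold frag_tilde; encsolve. Qed.

Ltac frag_inversion := intros s F r H; repeat rewrite <- app_assoc in H; repeat dstep.

Lemma parse_frag_atom : forall s F r, parses (frag_atom ++ s) F r -> exists t, parses_term s t r /\ F = so_atom t.
Proof. unfold frag_atom. frag_inversion. eauto. Qed.
Lemma parse_frag_neg : forall s F r, parses (frag_neg ++ s) F r -> exists a, parses s a r /\ F = so_neg a.
Proof. unfold frag_neg. frag_inversion. eauto. Qed.
Lemma parse_frag_and : forall s F r, parses (frag_and ++ s) F r ->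
  exists a b r1, parses s a r1 /\ parses r1 b r /\ F = SAnd a b.
Proof. unfold frag_and. frag_inversion. eauto 6. Qed.
Lemma parse_frag_or : forall s F r, parses (frag_or ++ s) F r ->
  exists a b r1, parses s a r1 /\ parses r1 b r /\ F = so_or a b.
Proof. unfold frag_or. frag_inversion. eauto 6. Qed.
Lemma parse_frag_next : forall s F r, parses (frag_next ++ s) F r -> exists a, parses s a r /\ F = so_next a.
Proof. unfold frag_next, setk_frag, shifted_by_2. frag_inversion. eauto. Qed.
Lemma parse_frag_future : forall s F r, parses (frag_future ++ s) F r -> exists a, parses s a r /\ F = so_future a.
Proof. unfold frag_future, setk_frag, shifted_by_2, shifted_by_4. frag_inversion. eauto. Qed.
Lemma parse_frag_glob : forall s F r, parses (frag_glob ++ s) F r -> exists a, parses s a r /\ F = so_glob a.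
Proof. unfold frag_glob, setk_frag, shifted_by_2, shifted_by_4. frag_inversion. eauto. Qed.
Lemma parse_frag_until : forall s F r, parses (frag_until ++ s) F r ->
  exists a b r1, parses s a r1 /\ parses r1 b r /\ F = so_until a b.
Proof. unfold frag_until, setk_frag, shifted_by_2, shifted_by_4. frag_inversion. eauto 6. Qed.
Lemma parse_frag_release : forall s F r, parses (frag_release ++ s) F r ->
  exists a b r1, parses s a r1 /\ parses r1 b r /\ F = so_release a b.
Proof. unfold frag_release, setk_frag, shifted_by_2, shifted_by_4. frag_inversion. eauto 6. Qed.
Lemma parse_frag_tilde : forall s F r, parses (frag_tilde ++ s) F r -> exists a, parses s a r /\ F = SNeg a.
Proof. unfold frag_tilde. frag_inversion. eauto. Qed.

(* States: [SInit] before the left endmarker,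
   [SStart] at the beginning of a formula, [ST1]..[ST3] after 1..3 bits of a
   constructor tag, [SNf]/[SNf2] inside the first bit pair of an atom number,
   [SNl]/[SNl2] inside a later bit pair, [SHalt] after an error or the end.
   A tag is replaced by its fragment, a number by its numeral; anything
   ill-formed produces [poison]. *)
Inductive rstate := SInit | SStart | ST1 (b0 : bool) | ST2 (b0 b1 : bool) | ST3 (b0 b1 b2 : bool)
  | SNf | SNf2 (c : bool) | SNl | SNl2 (c : bool) | SHalt.

(* The numeral prefix contributed by a binary digit [b]: b + 2 * _. *)
Definition digit_frag (b : bool) : list bool :=
  tag 3 ++ enc_term (if b then TOne else TZero) ++ tag 4 ++ enc_term two.
Definition tag_out (b0 b1 b2 b3 : bool) : list bool * rstate :=
  match b0, b1, b2, b3 with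
  | false, false, false, false => (frag_atom, SNf)
  | true, false, false, false => (frag_neg, SStart)
  | false, true, false, false => (frag_and, SStart)
  | true, true, false, false => (frag_or, SStart)
  | false, false, true, false => (frag_next, SStart)
  | true, false, true, false => (frag_future, SStart)
  | false, true, true, false => (frag_glob, SStart)
  | true, true, true, false => (frag_until, SStart)
  | false, false, false, true => (frag_release, SStart)
  | true, false, false, true => (frag_tilde, SStart)
  | _, _, _, _ => (poison, SHalt)
  end.

Definition rstep (s : rstate) (b : bool) : list bool * rstate :=
  match s with
  | SStart => ([], ST1 b)
  | ST1 b0 => ([], ST2 b0 b)
  | ST2 b0 b1 => ([], ST3 b0 b1 b)
  | ST3 b0 b1 b2 => tag_out b0 b1 b2 b
  | SNf => ([], SNf2 b)
  | SNf2 c0 => match c0, b with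
               | false, true => (enc_term TZero, SStart)
               | false, false => (enc_term TOne, SStart)
               | true, _ => (digit_frag b, SNl) end
  | SNl => ([], SNl2 b)
  | SNl2 c0 => match c0, b with
               | false, false => (enc_term TOne, SStart)
               | false, true => (poison, SHalt)
               | true, _ => (digit_frag b, SNl) end
  | _ => ([], SHalt)
  end.

(* Output at the right endmarker: only a complete formula may end there. *)
Definition rend (s : rstate) : list bool :=
  match s with SStart | SHalt | SInit => [] | _ => poison end.

Fixpoint stream (s : rstate) (w : list bool) : list bool :=
  match w with
  | [] => rend s
  | b :: w' => let (o, s') := rstep s b in
               o ++ (match s' with SHalt => [] | _ => stream s' w' end)
  end.

Lemma stream_numpos : forall p r,
  stream SNl (enc_pos p ++ false :: false :: r) = enc_term (numpos p) ++ stream SStart r.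
Proof.
  induction p; intros r; simpl in *.
  - rewrite IHp. unfold digit_frag. simpl. repeat (rewrite <- ?app_assoc; simpl). reflexivity.
  - rewrite IHp. unfold digit_frag. simpl. repeat (rewrite <- ?app_assoc; simpl). reflexivity.
  - reflexivity.
Qed.

Lemma stream_num : forall n r, stream SNf (enc_nat n ++ r) = enc_term (num n) ++ stream SStart r.
Proof.
  intros [|n] r; [reflexivity|].
  unfold enc_nat, num. rewrite <- app_assoc.
  destruct (Pos.of_nat (S n)) as [p|p|]; simpl.
  - rewrite (stream_numpos p). unfold digit_frag. simpl. repeat (rewrite <- ?app_assoc; simpl). reflexivity.
  - rewrite (stream_numpos p). unfold digit_frag. simpl. repeat (rewrite <- ?app_assoc; simpl). reflexivity.
  - reflexivity.
Qed.

Lemma stream_enc : forall phi r, stream SStart (enc_ltl phi ++ r) = enc_sform (ltl2so phi) ++ stream SStart r.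
Proof.
  induction phi; intros r; cbn [enc_ltl ltl2so]; repeat rewrite <- app_assoc.
  - rewrite enc_so_atom; change (stream SStart (tag 0 ++ ?w)) with (frag_atom ++ stream SNf w);
    rewrite stream_num, app_assoc. reflexivity.
  - rewrite enc_so_neg; change (stream SStart (tag 1 ++ ?w)) with (frag_neg ++ stream SStart w);
    rewrite IHphi, app_assoc. reflexivity.
  - rewrite enc_so_and; change (stream SStart (tag 2 ++ ?w)) with (frag_and ++ stream SStart w);
    rewrite IHphi1, IHphi2, !app_assoc. reflexivity.
  - rewrite enc_so_or; change (stream SStart (tag 3 ++ ?w)) with (frag_or ++ stream SStart w);
    rewrite IHphi1, IHphi2, !app_assoc. reflexivity.
  - rewrite enc_so_next; change (stream SStart (tag 4 ++ ?w)) with (frag_next ++ stream SStart w);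
    rewrite IHphi, app_assoc. reflexivity.
  - rewrite enc_so_future; change (stream SStart (tag 5 ++ ?w)) with (frag_future ++ stream SStart w);
    rewrite IHphi, app_assoc. reflexivity.
  - rewrite enc_so_glob; change (stream SStart (tag 6 ++ ?w)) with (frag_glob ++ stream SStart w);
    rewrite IHphi, app_assoc. reflexivity.
  - rewrite enc_so_until; change (stream SStart (tag 7 ++ ?w)) with (frag_until ++ stream SStart w);
    rewrite IHphi1, IHphi2, !app_assoc. reflexivity.
  - rewrite enc_so_release; change (stream SStart (tag 8 ++ ?w)) with (frag_release ++ stream SStart w);
    rewrite IHphi1, IHphi2, !app_assoc. reflexivity.
  - rewrite enc_so_tilde; change (stream SStart (tag 9 ++ ?w)) with (frag_tilde ++ stream SStart w);
    rewrite IHphi, app_assoc. reflexivity.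
Qed.

Lemma parse_digit_frag : forall b s t r, parses_term (digit_frag b ++ s) t r ->
  exists u, parses_term s u r /\ t = TAdd (if b then TOne else TZero) (TMul two u).
Proof. intros b s t r H. unfold digit_frag in H. repeat rewrite <- app_assoc in H. repeat dstep. eauto. Qed.

Lemma stream_numpos_inv : forall L w, length w <= L -> forall t r, parses_term (stream SNl w) t r ->
  exists p w', w = enc_pos p ++ [false; false] ++ w' /\ t = numpos p /\ r = stream SStart w'.
Proof.
  induction L; intros w Hl t r H.
  - destruct w; [|simpl in Hl; lia]. change (stream SNl []) with (poison ++ []) in H.
    now apply poison_not_parses_term in H.
  - destruct w as [|c0 [|c1 w]].
    + change (stream SNl []) with (poison ++ []) in H. now apply poison_not_parses_term in H.
    + change (stream SNl [c0]) with (poison ++ []) in H. now apply poison_not_parses_term in H.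
    + destruct c0.
      * change (stream SNl (true :: c1 :: w)) with (digit_frag c1 ++ stream SNl w) in H.
        apply parse_digit_frag in H. destruct H as [u [H ->]].
        simpl in Hl. destruct (IHL w ltac:(lia) _ _ H) as [p [w' [-> [-> ->]]]].
        exists (if c1 then xI p else xO p), w'. destruct c1; repeat split.
      * destruct c1.
        -- change (stream SNl (false :: true :: w)) with (poison ++ []) in H.
          now apply poison_not_parses_term in H.
        -- change (stream SNl (false :: false :: w)) with (enc_term TOne ++ stream SStart w) in H.
          apply parses_term_enc in H. destruct H as [-> ->].
           exists xH, w. repeat split.
Qed.

Lemma enc_nat_pos : forall p, enc_nat (Pos.to_nat p) = enc_pos p ++ [false; false].
Proof.
  intros p. destruct (Pos2Nat.is_succ p) as [k Hk]. unfold enc_nat. rewrite Hk.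
  rewrite <- Hk, Pos2Nat.id. reflexivity.
Qed.
Lemma num_pos : forall p, num (Pos.to_nat p) = numpos p.
Proof.
  intros p. destruct (Pos2Nat.is_succ p) as [k Hk]. unfold num. rewrite Hk.
  rewrite <- Hk, Pos2Nat.id. reflexivity.
Qed.

Lemma stream_num_inv : forall w t r, parses_term (stream SNf w) t r ->
  exists n w', w = enc_nat n ++ w' /\ t = num n /\ r = stream SStart w'.
Proof.
  intros w t r H.
  destruct w as [|c0 [|c1 w]].
  + change (stream SNf []) with (poison ++ []) in H. now apply poison_not_parses_term in H.
  + change (stream SNf [c0]) with (poison ++ []) in H. now apply poison_not_parses_term in H.
  + destruct c0.
    * change (stream SNf (true :: c1 :: w)) with (digit_frag c1 ++ stream SNl w) in H.
      apply parse_digit_frag in H. destruct H as [u [H ->]].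
      destruct (stream_numpos_inv _ w (le_n _) _ _ H) as [p [w' [-> [-> ->]]]].
      exists (Pos.to_nat (if c1 then xI p else xO p)), w'.
      rewrite enc_nat_pos, num_pos. destruct c1; (split; [simpl; rewrite <- app_assoc; reflexivity| split; reflexivity]).
    * destruct c1.
      -- change (stream SNf (false :: true :: w)) with (enc_term TZero ++ stream SStart w) in H.
        apply parses_term_enc in H. destruct H as [-> ->].
         exists 0, w. repeat split.
      -- change (stream SNf (false :: false :: w)) with (enc_term TOne ++ stream SStart w) in H.
        apply parses_term_enc in H. destruct H as [-> ->].
         exists 1, w. repeat split.
Qed.

Lemma stream_tag b0 b1 b2 b3 w : stream SStart (b0 :: b1 :: b2 :: b3 :: w) =
  fst (tag_out b0 b1 b2 b3) ++ match snd (tag_out b0 b1 b2 b3) with SHalt => [] | s' => stream s' w end.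
Proof. simpl. destruct (tag_out b0 b1 b2 b3) as [l s]. simpl. destruct s; reflexivity. Qed.

Lemma poison_not_parses_seq : forall n Fs, ~ parses_seq n (poison ++ []) Fs [].
Proof.
  intros [|n] Fs H.
  - apply parses_seq_nil_inv in H. destruct H as [_ H]. discriminate.
  - apply parses_seq_cons_inv in H. destruct H as [F [Fs' [r1 [H _]]]]. eapply poison_not_parses; eauto.
Qed.

Lemma nonempty_not_parses_none : forall fr s Fs, fr <> [] -> parses_seq 0 (fr ++ s) Fs [] -> False.
Proof. intros fr s Fs Hf H. apply parses_seq_nil_inv in H. destruct H as [_ H]. destruct fr; [congruence|discriminate]. Qed.

Ltac inv_unary lem C :=
  match goal with
  | H1 : parses _ _ _, H2 : parses_seq _ _ _ _, IHL : _ , Hw : length ?w <= _ |- _ =>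
    apply lem in H1; destruct H1 as [a [H1 ->]];
    destruct (IHL w Hw _ _ (parses_seq_cons _ _ _ _ _ _ H1 H2)) as [phis [-> Hm]];
    destruct phis as [|p1 ps]; [discriminate|]; injection Hm; intros; subst;
    exists (C p1 :: ps); split; reflexivity
  end.
Ltac inv_binary lem C :=
  match goal with
  | H1 : parses _ _ _, H2 : parses_seq _ _ _ _, IHL : _ , Hw : length ?w <= _ |- _ =>
    apply lem in H1; destruct H1 as [a [b [r2 [H1 [H3 ->]]]]];
    destruct (IHL w Hw _ _ (parses_seq_cons _ _ _ _ _ _ H1 (parses_seq_cons _ _ _ _ _ _ H3 H2)))
      as [phis [-> Hm]];
    destruct phis as [|p1 [|p2 ps]]; try discriminate; injection Hm; intros; subst;
    exists (C p1 p2 :: ps); split; [simpl; rewrite !app_assoc; reflexivity | reflexivity]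
  end.

Theorem stream_inv : forall L w, length w <= L -> forall n Fs, parses_seq n (stream SStart w) Fs [] ->
  exists phis, w = flat_map enc_ltl phis /\ Fs = map ltl2so phis.
Proof.
  induction L; intros w Hl n Fs H.
  - destruct w; [|simpl in Hl; lia]. simpl in H. destruct n.
    + apply parses_seq_nil_inv in H. destruct H as [-> _]. exists []. auto.
    + apply parses_seq_cons_inv in H. destruct H as [? [? [? [H _]]]]. now apply nil_not_parses in H.
  - destruct w as [|b0 [|b1 [|b2 [|b3 w]]]].
    + simpl in H. destruct n.
      * apply parses_seq_nil_inv in H. destruct H as [-> _]. exists []. auto.
      * apply parses_seq_cons_inv in H. destruct H as [? [? [? [H _]]]]. now apply nil_not_parses in H.
    + exfalso. change (stream SStart [b0]) with (poison ++ []) in H. eapply poison_not_parses_seq; eauto.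
    + exfalso. change (stream SStart [b0; b1]) with (poison ++ []) in H. eapply poison_not_parses_seq; eauto.
    + exfalso. change (stream SStart [b0; b1; b2]) with (poison ++ []) in H.
      eapply poison_not_parses_seq; eauto.
    + simpl in Hl. assert (Hw : length w <= L) by lia. clear Hl.
      rewrite stream_tag in H.
      destruct b0, b1, b2, b3; cbn [tag_out fst snd] in H;
      try solve [exfalso; rewrite <- (app_nil_r poison) in H; eapply poison_not_parses_seq; eauto];
      (destruct n as [|n]; [exfalso; eapply nonempty_not_parses_none; [|exact H]; cbv; discriminate|]);
      apply parses_seq_cons_inv in H; destruct H as [F [Fs' [r1 [H1 [H2 ->]]]]].
      all: first
        [ apply parse_frag_atom in H1; destruct H1 as [t [H1 ->]];
          apply stream_num_inv in H1; destruct H1 as [m [w' [-> [-> ->]]]];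
          rewrite length_app in Hw;
          destruct (IHL w' ltac:(lia) _ _ H2) as [phis [-> ->]];
          exists (LAtom m :: phis); split; reflexivity
        | inv_unary parse_frag_neg LNeg | inv_unary parse_frag_next LX
        | inv_unary parse_frag_future LF | inv_unary parse_frag_glob LG
        | inv_unary parse_frag_tilde LTilde
        | inv_binary parse_frag_and LAnd | inv_binary parse_frag_or LOr
        | inv_binary parse_frag_until LU | inv_binary parse_frag_release LR ].
Qed.

(** * A constant-space transducer computing the rewriting *)

Definition rstate_code (s : rstate) : nat :=
  match s with
  | SInit => 0 | SStart => 1 | ST1 b => 2 + Nat.b2n b | ST2 b0 b1 => 4 + Nat.b2n b0 + 2 * Nat.b2n b1
  | ST3 b0 b1 b2 => 8 + Nat.b2n b0 + 2 * Nat.b2n b1 + 4 * Nat.b2n b2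
  | SNf => 16 | SNf2 c => 17 + Nat.b2n c | SNl => 19 | SNl2 c => 20 + Nat.b2n c | SHalt => 22 end.
Definition rstate_decode (n : nat) : rstate :=
  match n with
  | 0 => SInit | 1 => SStart | 2 => ST1 false | 3 => ST1 true
  | 4 => ST2 false false | 5 => ST2 true false | 6 => ST2 false true | 7 => ST2 true true
  | 8 => ST3 false false false | 9 => ST3 true false false | 10 => ST3 false true false
  | 11 => ST3 true true false | 12 => ST3 false false true | 13 => ST3 true false true
  | 14 => ST3 false true true | 15 => ST3 true true true
  | 16 => SNf | 17 => SNf2 false | 18 => SNf2 true | 19 => SNl | 20 => SNl2 false | 21 => SNl2 true
  | _ => SHalt end.
Lemma rstate_decode_code : forall s, rstate_decode (rstate_code s) = s.
Proof. destruct s; repeat match goal with b : bool |- _ => destruct b end; reflexivity. Qed.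
Lemma rstate_code_bound : forall s, rstate_code s < 23.
Proof. destruct s; repeat match goal with b : bool |- _ => destruct b end; simpl; lia. Qed.

Definition control (pre : list bool) (s : rstate) (a : Sym) : list bool * rstate * Dir :=
  match s, a with
  | SInit, LEnd => (pre, SStart, DR)
  | SInit, _ => ([], SHalt, DS)
  | SHalt, _ => ([], SHalt, DS)
  | _, Bit b => let (o, s') := rstep s b in (o, s', match s' with SHalt => DS | _ => DR end)
  | _, REnd => (rend s, SHalt, DS)
  | _, LEnd => ([], SHalt, DS)
  end.

(* All words the control ever outputs, hence a bound on their length. *)
Definition control_outputs (pre : list bool) : list (list bool) :=
  [pre; frag_atom; frag_neg; frag_and; frag_or; frag_next; frag_future; frag_glob; frag_until; frag_release; frag_tilde; poison;
   digit_frag true; digit_frag false; enc_term TOne; enc_term TZero; []].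

Lemma control_output_listed : forall pre s a, In (fst (fst (control pre s a))) (control_outputs pre).
Proof.
  intros pre s a.
  destruct s; destruct a; repeat match goal with b : bool |- _ => destruct b end;
  simpl; tauto.
Qed.

Definition maxlen (l : list (list bool)) : nat := fold_right (fun x acc => Nat.max (length x) acc) 0 l.
Lemma maxlen_in : forall l x, In x l -> length x <= maxlen l.
Proof. induction l; simpl; intros x H; [contradiction|]. destruct H; subst; [lia|]. specialize (IHl _ H); lia. Qed.

Definition rstate_eq_dec : forall a b : rstate, {a = b} + {a <> b}.
Proof. decide equality; apply bool_dec. Defined.

(* The machine state [rstate_code s * block + i] means: in control state
   [s], [i] symbols of the current output word already written. *)
Section stream_machine.
Variable pre : list bool.
Definition block : nat := S (maxlen (control_outputs pre)).
Lemma block_pos : block <> 0. Proof. unfold block; lia. Qed.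
Arguments block : simpl never.
Lemma control_output_short : forall s a, length (fst (fst (control pre s a))) < block.
Proof. intros. unfold block. pose proof (maxlen_in _ _ (control_output_listed pre s a)). lia. Qed.

Definition machine_delta (q : nat) (a : Sym) (g : nat) : nat * Dir * nat * Dir * option bool :=
  let s := rstate_decode (q / block) in
  let i := q mod block in
  match control pre s a with
  | (o, s', d) =>
    if i <? length o then (S q, DS, 0, DS, Some (nth i o false))
    else (rstate_code s' * block, d, 0, DS, None)
  end.

Definition machine_halting (q : nat) : bool := match rstate_decode (q / block) with SHalt => true | _ => false end.

Definition stream_machine : LTM := mkLTM (23 * block) 1 0 machine_halting machine_delta.

Lemma block_divmod : forall a i, i < block -> (a * block + i) / block = a /\ (a * block + i) mod block = i.
Proof.
  intros a i Hi. assert (Hd : (a * block + i) / block = a).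
  { rewrite Nat.div_add_l by apply block_pos. rewrite Nat.div_small by lia. lia. }
  split; auto. pose proof (Nat.div_mod_eq (a * block + i) block). rewrite Hd in H. lia.
Qed.

Lemma machine_wf : wf_LTM stream_machine.
Proof.
  unfold wf_LTM, stream_machine; cbn [nQ nG q0 delta]. split; [lia|]. split; [pose proof block_pos; lia|].
  intros q s g Hq Hg. unfold machine_delta.
  pose proof (Nat.div_mod_eq q block) as Hdm.
  pose proof (Nat.mod_upper_bound q block block_pos) as Hm.
  assert (Hqd : q / block < 23).
  { destruct (Nat.lt_ge_cases (q / block) 23); auto.
    assert (block * 23 <= block * (q / block)) by (apply Nat.mul_le_mono_l; auto). lia. }
  pose proof (control_output_short (rstate_decode (q / block)) s) as Ho.
  destruct (control pre (rstate_decode (q / block)) s) as [[o s'] d] eqn:E. simpl in Ho.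
  destruct (q mod block <? length o) eqn:Ei.
  - apply Nat.ltb_lt in Ei. split; [|lia].
    assert (block * (q / block) <= block * 22) by (apply Nat.mul_le_mono_l; lia). lia.
  - split; [|lia]. pose proof (rstate_code_bound s').
    assert (rstate_code s' * block <= 22 * block) by (apply Nat.mul_le_mono_r; lia). pose proof block_pos. lia.
Qed.

Lemma step_work_head : forall w c, cj (step stream_machine w c) = cj c.
Proof.
  intros w c. unfold step. destruct (halting stream_machine (cq c)); auto.
  simpl. unfold machine_delta. destruct (control pre _ _) as [[o s'] d].
  destruct (_ <? _); reflexivity.
Qed.

Lemma run_work_head : forall w k, cj (run stream_machine w k) = 0.
Proof.
  intros w k. induction k; [reflexivity|].
  unfold run in *. simpl. rewrite step_work_head. exact IHk.
Qed.

Lemma firstn_S_nth : forall (o : list bool) i, i < length o -> firstn (S i) o = firstn i o ++ [nth i o false].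
Proof.
  induction o; intros i Hi; simpl in *; [lia|].
  destruct i; [reflexivity|]. simpl. rewrite IHo by lia. reflexivity.
Qed.

Lemma not_halting : forall s i, s <> SHalt -> i < block -> machine_halting (rstate_code s * block + i) = false.
Proof.
  intros s i Hs Hi. unfold machine_halting. destruct (block_divmod (rstate_code s) i Hi) as [-> _].
  rewrite rstate_decode_code. destruct s; congruence.
Qed.

Lemma emit_output : forall w s o s' d out pos, s <> SHalt -> control pre s (read_in w pos) = (o, s', d) ->
  forall n i c, i + n = length o -> cq c = rstate_code s * block + i -> ci c = pos ->
  cout c = out ++ firstn i o ->
  exists c', Nat.iter n (step stream_machine w) c = c' /\ cq c' = rstate_code s * block + length o /\
    ci c' = pos /\ cout c' = out ++ o.
Proof.
  intros w s o s' d out pos Hs Hd n. induction n; intros i c Hn Hq Hi Ho.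
  - exists c. simpl. repeat split; auto. rewrite Hq; f_equal; lia.
    rewrite Ho. rewrite firstn_all2 by lia. reflexivity.
  - assert (Hlo : i < length o) by lia.
    assert (Hlt : i < block) by (pose proof (control_output_short s (read_in w pos)) as HH; rewrite Hd in HH; simpl in HH; lia).
    destruct (block_divmod (rstate_code s) i Hlt) as [Hdiv Hmod].
    rewrite Nat.iter_succ_r.
    assert (HS : cq (step stream_machine w c) = S (cq c) /\ ci (step stream_machine w c) = ci c /\
                 cout (step stream_machine w c) = cout c ++ [nth i o false]).
    { unfold step. cbn [halting delta stream_machine]. rewrite Hq, not_halting by auto.
      unfold machine_delta. cbv beta zeta. rewrite Hdiv, Hmod, rstate_decode_code, Hi, Hd.
      replace (i <? length o) with true by (symmetry; apply Nat.ltb_lt; auto).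
      cbn [cq ci cout move_in]. auto. }
    destruct HS as [H1 [H2 H3]].
    apply (IHn (S i)); [lia| rewrite H1, Hq; lia | rewrite H2; auto |].
    rewrite H3, Ho, firstn_S_nth by auto. rewrite app_assoc. reflexivity.
Qed.

Definition at_control (c : cfg) (s : rstate) (pos : nat) (out : list bool) : Prop :=
  cq c = rstate_code s * block /\ ci c = pos /\ cout c = out.

Lemma control_transition : forall w c s pos out o s' d, s <> SHalt -> at_control c s pos out ->
  control pre s (read_in w pos) = (o, s', d) ->
  exists k, at_control (Nat.iter k (step stream_machine w) c) s' (move_in (length w) pos d) (out ++ o).
Proof.
  intros w c s pos out o s' d Hs [Hq [Hi Ho]] Hd.
  destruct (emit_output w s o s' d out pos Hs Hd (length o) 0 c ltac:(lia) ltac:(lia) Hi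
              ltac:(rewrite Ho; simpl; rewrite app_nil_r; reflexivity))
    as [c' [Hc' [Hq' [Hi' Ho']]]].
  exists (S (length o)). rewrite Nat.iter_succ, Hc'.
  assert (Hlt : length o < block) by (pose proof (control_output_short s (read_in w pos)) as HH; rewrite Hd in HH; simpl in HH; lia).
  destruct (block_divmod (rstate_code s) (length o) Hlt) as [Hdiv Hmod].
  unfold step. cbn [halting delta stream_machine]. rewrite Hq', not_halting by auto.
  unfold machine_delta. cbv beta zeta. rewrite Hdiv, Hmod, rstate_decode_code, Hi', Hd.
  replace (length o <? length o) with false by (symmetry; apply Nat.ltb_ge; lia).
  unfold at_control; cbn [cq ci cout]. repeat split; auto. rewrite Ho', app_nil_r. reflexivity.
Qed.

Lemma halting_state : forall c : cfg, cq c = rstate_code SHalt * block -> machine_halting (cq c) = true.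
Proof.
  intros c H. rewrite H. unfold machine_halting.
  destruct (block_divmod (rstate_code SHalt) 0 ltac:(pose proof block_pos; lia)) as [Hd _].
  rewrite Nat.add_0_r in Hd. rewrite Hd. reflexivity.
Qed.

Lemma read_in_middle : forall u b rest, read_in (u ++ b :: rest) (S (length u)) = Bit b.
Proof. intros. simpl. rewrite nth_error_app2 by lia. rewrite Nat.sub_diag. reflexivity. Qed.
Lemma read_in_end : forall u, read_in u (S (length u)) = REnd.
Proof. intros. simpl. replace (nth_error u (length u)) with (@None bool) by (symmetry; apply nth_error_None; lia). reflexivity. Qed.

Lemma run_from_position : forall rest u c s out, s <> SHalt -> s <> SInit ->
  at_control c s (S (length u)) out ->
  exists k, machine_halting (cq (Nat.iter k (step stream_machine (u ++ rest)) c)) = true /\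
            cout (Nat.iter k (step stream_machine (u ++ rest)) c) = out ++ stream s rest.
Proof.
  induction rest as [|b rest IH]; intros u c s out Hs Hi HI.
  - rewrite app_nil_r.
    destruct (control_transition u c s _ out (rend s) SHalt DS Hs HI) as [k Hk].
    { rewrite read_in_end. destruct s; try congruence; reflexivity. }
    exists k. destruct Hk as [Hq [_ Ho]]. split; [apply halting_state; auto|]. rewrite Ho. reflexivity.
  - destruct (rstep s b) as [o s'] eqn:Eb.
    assert (Hd : control pre s (read_in (u ++ b :: rest) (S (length u))) =
                 (o, s', match s' with SHalt => DS | _ => DR end)).
    { rewrite read_in_middle. destruct s; try congruence; cbn [control]; rewrite Eb; reflexivity. }
    destruct (control_transition _ c s _ out _ _ _ Hs HI Hd) as [k Hk].
    assert (HO : stream s (b :: rest) = o ++ match s' with SHalt => [] | _ => stream s' rest end).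
    { simpl. rewrite Eb. reflexivity. }
    destruct (rstate_eq_dec s' SHalt) as [->|Hne].
    + exists k. destruct Hk as [Hq [_ Ho]]. split; [apply halting_state; auto|]. rewrite Ho, HO, app_nil_r. reflexivity.
    + assert (Hmv : move_in (length (u ++ b :: rest)) (S (length u))
                      (match s' with SHalt => DS | _ => DR end) = S (length (u ++ [b]))).
      { destruct s'; try congruence; cbn [move_in]; rewrite !length_app; cbn [length]; rewrite Nat.min_l; lia. }
      rewrite Hmv in Hk.
      assert (Hs'i : s' <> SInit).
      { intro; subst. destruct s; simpl in Eb; try congruence;
        repeat match goal with b : bool |- _ => destruct b end; unfold tag_out in Eb; simpl in Eb; congruence. }
      replace (u ++ b :: rest) with ((u ++ [b]) ++ rest) in * by (rewrite <- app_assoc; reflexivity).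
      destruct (IH (u ++ [b]) _ s' (out ++ o) Hne Hs'i Hk) as [k2 [H1 H2]].
      exists (k2 + k). rewrite Nat.iter_add. split; auto. rewrite H2, HO, <- app_assoc.
      destruct s'; try congruence; reflexivity.
Qed.

Theorem machine_correct : forall w, exists k, halting stream_machine (cq (run stream_machine w k)) = true /\
  cout (run stream_machine w k) = pre ++ stream SStart w.
Proof.
  intros w.
  assert (HI0 : at_control (init_cfg stream_machine) SInit 0 []) by (unfold at_control; simpl; repeat split).
  destruct (control_transition w _ SInit 0 [] pre SStart DR ltac:(congruence) HI0 ltac:(reflexivity)) as [k1 Hk1].
  assert (Hm : move_in (length w) 0 DR = S (length (@nil bool))) by (simpl; lia).
  rewrite Hm in Hk1. simpl app in Hk1.
  destruct (run_from_position w [] _ SStart pre ltac:(congruence) ltac:(congruence) Hk1) as [k2 [H1 H2]].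
  exists (k2 + k1). unfold run. rewrite Nat.iter_add. split; auto.
Qed.
End stream_machine.

Definition frag_time0 : list bool := tag 6 ++ enc_nat 0 ++ tag 4 ++ enc_sform (SEq (TVar 0) TZero).
Definition pre_count : list bool :=
  tag 8 ++ enc_nat 0 ++ enc_nat 3 ++ tag 8 ++ enc_nat 0 ++ enc_nat 1 ++ frag_time0.
Definition pre_restr (CF : (term -> term -> sform) -> sform) : list bool :=
  tag 8 ++ enc_nat 0 ++ enc_nat 3 ++ tag 8 ++ enc_nat 0 ++ enc_nat 1 ++ tag 4
  ++ enc_sform (so_team_in_class CF) ++ frag_time0.
Definition pre_kripke (CF : (term -> term -> sform) -> sform) : list bool :=
  tag 8 ++ enc_nat 0 ++ enc_nat 3 ++ tag 8 ++ enc_nat 0 ++ enc_nat 1 ++ tag 6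
  ++ enc_nat 6 ++ tag 6 ++ enc_nat 7 ++ tag 8 ++ enc_nat 1 ++ enc_nat 2 ++ tag 8 ++ enc_nat 2
  ++ enc_nat 2 ++ tag 4 ++ enc_sform so_wf_frame ++ tag 4 ++ enc_sform (so_team_in_kripke CF) ++ tag 4
  ++ enc_sform (so_kripke_in_team CF) ++ frag_time0.

Lemma enc_sent_count : forall h, enc_sform (sent_count h) = pre_count ++ enc_sform h.
Proof. intros h. unfold pre_count, frag_time0. encsolve. Qed.
Lemma enc_sent_restr : forall CF h, enc_sform (sent_restr CF h) = pre_restr CF ++ enc_sform h.
Proof. intros CF h. unfold pre_restr, frag_time0, sent_restr, at_time0. cbn [enc_sform]. repeat rewrite <- app_assoc. reflexivity. Qed.
Lemma enc_sent_kripke : forall CF h, enc_sform (sent_kripke CF h) = pre_kripke CF ++ enc_sform h.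
Proof. intros CF h. unfold pre_kripke, frag_time0, sent_kripke, at_time0. cbn [enc_sform]. repeat rewrite <- app_assoc. reflexivity. Qed.

Lemma parse_pre_count : forall s F, parses (pre_count ++ s) F [] -> exists a, parses s a [] /\ F = sent_count a.
Proof. unfold pre_count, frag_time0. intros s F H; repeat rewrite <- app_assoc in H; repeat dstep; eauto. Qed.
Lemma parse_pre_restr : forall CF s F, parses (pre_restr CF ++ s) F [] -> exists a, parses s a [] /\ F = sent_restr CF a.
Proof. intros CF. unfold pre_restr, frag_time0. intros s F H; repeat rewrite <- app_assoc in H; repeat dstep; eauto. Qed.
Lemma parse_pre_kripke : forall CF s F, parses (pre_kripke CF ++ s) F [] -> exists a, parses s a [] /\ F = sent_kripke CF a.
Proof. intros CF. unfold pre_kripke, frag_time0. intros s F H; repeat rewrite <- app_assoc in H; repeat dstep; eauto. Qed.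

Lemma prefixed_stream_computable : forall pre,
  logspace_computable (fun w => pre ++ stream SStart w).
Proof.
  intros pre. exists (stream_machine pre), 0. split; [apply machine_wf|]. intros w. split.
  - apply machine_correct.
  - intros k. rewrite run_work_head. lia.
Qed.

Theorem reduction_generic : forall (P : ltl -> Prop) (pre : list bool) (W : sform -> sform),
  (forall h, enc_sform (W h) = pre ++ enc_sform h) ->
  (forall s F, parses (pre ++ s) F [] -> exists a, parses s a [] /\ F = W a) ->
  (forall phi, sclosed [] [] (W (ltl2so phi))) ->
  (forall phi, sholds e10 e20 (W (ltl2so phi)) <-> P phi) ->
  logspace_reducible (lang_ltl P) (lang_sform Delta20).
Proof.
  intros P pre W Henc Hdec Hcl Hsem.
  exists (fun w => pre ++ stream SStart w). split; [apply prefixed_stream_computable|].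
  intros w. split.
  - intros [phi [-> HP]]. exists (W (ltl2so phi)). split.
    + rewrite Henc, <- (app_nil_r (enc_ltl phi)), stream_enc. simpl. rewrite app_nil_r. reflexivity.
    + split; [apply Hcl|]. apply Hsem; auto.
  - intros [F [HF [Hc Hs]]].
    assert (HD : parses (pre ++ stream SStart w) F []).
    { rewrite HF. exists (fsize F). rewrite <- (app_nil_r (enc_sform F)). apply dec_form_enc. lia. }
    destruct (Hdec _ _ HD) as [a [Ha ->]].
    assert (HDs : parses_seq 1 (stream SStart w) [a] []).
    { apply (parses_seq_cons _ _ _ _ _ _ Ha). exists 0. reflexivity. }
    destruct (stream_inv _ w (le_n _) _ _ HDs) as [phis [-> Hm]].
    destruct phis as [|phi [|]]; try discriminate. injection Hm; intros ->.
    exists phi. split; [simpl; rewrite app_nil_r; reflexivity|]. apply Hsem. exact Hs.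
Qed.

Theorem mainTheorem12 :
  forall C : trace -> Prop,
    (C = ult_periodic \/ C = ult_constant) ->
    logspace_reducible (lang_ltl CountSat) (lang_sform Delta20) /\
    logspace_reducible (lang_ltl (CSat C)) (lang_sform Delta20) /\
    logspace_reducible (lang_ltl (CFinSat C)) (lang_sform Delta20).
Proof.
  intros C HC.
  assert (HCF : exists CF, (CF = so_periodic \/ CF = so_constant) /\ defines_class CF C).
  { destruct HC as [-> | ->]; eexists; split;
      [left; reflexivity | apply so_periodic_defines | right; reflexivity | apply so_constant_defines]. }
  destruct HCF as [CF [HCF Hdef]].
  split; [|split].
  - apply (reduction_generic _ pre_count sent_count enc_sent_count parse_pre_count).
    + intros phi. apply sentences_closed.
    + apply sent_count_sem.
  - apply (reduction_generic _ (pre_restr CF) (sent_restr CF) (enc_sent_restr CF) (parse_pre_restr CF)).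
    + intros phi. apply sentences_closed; exact HCF.
    + apply sent_restr_sem; auto.
  - apply (reduction_generic _ (pre_kripke CF) (sent_kripke CF) (enc_sent_kripke CF) (parse_pre_kripke CF)).
    + intros phi. apply sentences_closed; exact HCF.
    + apply sent_kripke_sem; auto.
Qed.
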